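(* Let $M$ be a compact connected $1$-manifold and let $G$ be a group acting by homeomorphisms of $M$, generated by a finite symmetric set $\mathcal{G}$, and assume $G$ has subexponential growth, i.e. $\lim_{n\to\infty}\frac{1}{n}\log|B(n)| = 0$ where $B(n)$ is the set of elements of word length at most $n$ with respect to $\mathcal{G}$. Then for every $\varepsilon>0$ there is a homeomorphism $h$ of $M$ such that $hgh^{-1}$ is Lipschitz with Lipschitz constant at most $e^{\varepsilon}$ for every $g\in\mathcal{G}$. In particular, for every homeomorphism $f$ of the circle and every $\varepsilon>0$, $f$ is topologically conjugate to a Lipschitz homeomorphism with Lipschitz constant at most $e^{\varepsilon}$, and consequently the topological entropy of every circle homeomorphism is zero.
   Context: Word length $\|f\|$ of $f\in G$ with respect to $\mathcal{G}$: the minimal number of factors from $\mathcal{G}$ needed to write $f$. *)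

From Stdlib Require Import Reals List.
Import ListNotations.
Open Scope R_scope.

(** Compact connected 1-manifolds: up to homeomorphism, [0,1] or the circle. *)
Inductive cc1 : Type := Interval01 | Circle.

Definition pt (m : cc1) : Type :=
  match m with
  | Interval01 => {x : R | 0 <= x <= 1}
  | Circle => {x : R | 0 <= x < 1}   (* R/Z, fundamental domain [0,1) *)
  end.

Definition dist (m : cc1) : pt m -> pt m -> R :=
  match m return pt m -> pt m -> R with
  | Interval01 => fun x y => Rabs (proj1_sig x - proj1_sig y)
  | Circle => fun x y =>
      let d := Rabs (proj1_sig x - proj1_sig y) in Rmin d (1 - d)
  end.

Definition mcontinuous (m : cc1) (f : pt m -> pt m) : Prop :=
  forall x (eps : R), 0 < eps -> exists delta, 0 < delta /\
    forall y, dist m x y < delta -> dist m (f x) (f y) < eps.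

Definition homeo_pair (m : cc1) (h hi : pt m -> pt m) : Prop :=
  (forall x, hi (h x) = x) /\ (forall x, h (hi x) = x) /\
  mcontinuous m h /\ mcontinuous m hi.

Definition is_homeo (m : cc1) (h : pt m -> pt m) : Prop :=
  exists hi, homeo_pair m h hi.

Definition lipschitz (m : cc1) (L : R) (f : pt m -> pt m) : Prop :=
  forall x y, dist m (f x) (f y) <= L * dist m x y.

Record Group : Type := {
  gcar :> Type;
  gmul : gcar -> gcar -> gcar;
  ginv : gcar -> gcar;
  gone : gcar;
  gmulA : forall a b c, gmul a (gmul b c) = gmul (gmul a b) c;
  gmul1l : forall a, gmul gone a = a;
  gmul1r : forall a, gmul a gone = a;
  gmulVl : forall a, gmul (ginv a) a = gone;
  gmulVr : forall a, gmul a (ginv a) = gone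
}.

Definition is_homeo_action (G : Group) (m : cc1) (act : G -> pt m -> pt m) : Prop :=
  (forall x, act (gone G) x = x) /\
  (forall a b x, act (gmul G a b) x = act a (act b x)) /\
  (forall a, is_homeo m (act a)).

Definition word_eval (G : Group) (w : list G) : G := fold_right (gmul G) (gone G) w.

Definition is_word (G : Group) (gens : list G) (w : list G) : Prop :=
  forall s, In s w -> In s gens.

Definition symmetric_set (G : Group) (gens : list G) : Prop :=
  forall s, In s gens -> In (ginv G s) gens.

Definition generates (G : Group) (gens : list G) : Prop :=
  forall g, exists w, is_word G gens w /\ word_eval G w = g.

Definition in_ball (G : Group) (gens : list G) (n : nat) (g : G) : Prop :=
  exists w, is_word G gens w /\ (length w <= n)%nat /\ word_eval G w = g.

Definition ball_card (G : Group) (gens : list G) (n k : nat) : Prop :=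
  exists l : list G, NoDup l /\ (forall g, In g l <-> in_ball G gens n g) /\ length l = k.

Definition subexp_growth (G : Group) (gens : list G) : Prop :=
  exists c : nat -> nat, (forall n, ball_card G gens n (c n)) /\
    Un_cv (fun n => ln (INR (c n)) / INR n) 0.

(** Bowen (n,delta)-separated sets, and topological entropy zero:
    h(f) = sup_{delta>0} limsup_n (1/n) log s(n,delta) = 0, where s(n,delta) is the
    maximal cardinality of an (n,delta)-separated set. *)
Definition separated (m : cc1) (f : pt m -> pt m) (n : nat) (delta : R) (l : list (pt m)) : Prop :=
  NoDup l /\ forall x y, In x l -> In y l -> x <> y ->
    exists k, (k < n)%nat /\ delta < dist m (Nat.iter k f x) (Nat.iter k f y).

Definition top_entropy_zero (m : cc1) (f : pt m -> pt m) : Prop :=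
  forall delta, 0 < delta -> forall eta, 0 < eta -> exists N : nat,
    forall n, (N <= n)%nat -> forall l, separated m f n delta l ->
      INR (length l) <= exp (eta * INR n).

(** Give each element of the ball B(n) the weight e^{-εn}.  Subexponential
    growth makes Σ_n e^{-εn} |B(n)| finite, so μ = Σ_g w(g) · g^*(Lebesgue) is a finite
    measure dominating Lebesgue measure, positive on every nondegenerate arc and without
    atoms.  Its normalised distribution function H(x) = μ[x₀, x] / μ(M) is therefore a
    homeomorphism, and H⁻¹ is Lipschitz.  Right multiplication by a generator s maps B(n)
    injectively into B(n+1), so μ(s J) ≤ e^ε μ(J) for every arc J: this says exactly that
    H s H⁻¹ is e^ε-Lipschitz.  A single circle homeomorphism f is treated with the balls
    {f⁰, …, fⁿ} of linear growth.  Finally, n iterates of an e^{ε/2}-Lipschitz map expand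
    distances by at most e^{εn/2}, so an (n, δ)-separated set has O(e^{εn/2}) points and
    the topological entropy is at most ε for every ε > 0. *)

From Pilot Require Import Defs.
From Stdlib Require Import Reals List Lra Lia ZArith FinFun.
From Stdlib Require Import ClassicalEpsilon ProofIrrelevance FunctionalExtensionality.
From Coquelicot Require Import Coquelicot.
Import ListNotations.
Open Scope R_scope.

Lemma ex_series_le_nonneg (a b : nat -> R) :
  (forall n, 0 <= a n <= b n) -> ex_series b -> ex_series a.
Proof.
  intros Hab Hb. apply (ex_series_le a b); auto.
  intros n. change (norm (a n)) with (Rabs (a n)).
  rewrite Rabs_pos_eq; apply Hab.
Qed.

Lemma Series_nonneg (a : nat -> R) : (forall n, 0 <= a n) -> ex_series a -> 0 <= Series a.
Proof.
  intros Ha Hex. replace 0 with (0 * Series a) by ring.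
  rewrite <- Series_scal_l. apply Series_le; auto.
  intros n; split; [lra | rewrite Rmult_0_l; apply Ha].
Qed.

Lemma Series_tail_small (a : nat -> R) : ex_series a -> forall eta, 0 < eta ->
  exists N, Rabs (Series (fun k => a (S N + k)%nat)) < eta.
Proof.
  intros Ha eta Heta.
  assert (Hlim : is_lim_seq (sum_n a) (Series a)) by exact (Series_correct a Ha).
  apply is_lim_seq_spec in Hlim.
  destruct (Hlim (mkposreal eta Heta)) as [N HN].
  exists N. rewrite (Series_incr_n a (S N)) in HN by (lia || auto).
  specialize (HN N (le_n _)). simpl in HN.
  rewrite sum_n_Reals in HN. simpl pred.
  set (T := Series (fun k : nat => a (S (N + k)))) in *.
  replace (sum_f_R0 a N - (sum_f_R0 a N + T)) with (- T) in HN by ring.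
  rewrite Rabs_Ropp in HN. exact HN.
Qed.

Lemma ex_series_geom_bound (a : nat -> R) K q N : 0 <= K -> 0 <= q < 1 ->
  (forall n, 0 <= a n) -> (forall n, (N <= n)%nat -> a n <= K * q ^ n) -> ex_series a.
Proof.
  intros HK Hq Ha Hbound. apply (proj2 (ex_series_incr_n a N)).
  apply ex_series_le_nonneg with (b := fun k => (K * q ^ N) * q ^ k).
  - intros k; split; auto. rewrite Rmult_assoc, <- pow_add. apply Hbound; lia.
  - apply (ex_series_scal_l (K * q ^ N) (fun k => q ^ k)). apply ex_series_geom.
    rewrite Rabs_pos_eq; lra.
Qed.

Lemma Rmin_div p q z : 0 < z -> Rmin (p / z) (q / z) = Rmin p q / z.
Proof.
  intros Hz. assert (0 < / z) by (apply Rinv_0_lt_compat; lra). unfold Rdiv.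
  destruct (Rle_dec p q).
  - rewrite !Rmin_left; auto. apply Rmult_le_compat_r; lra.
  - rewrite !Rmin_right; try lra. apply Rmult_le_compat_r; lra.
Qed.

Definition lsum {A} (F : A -> R) (l : list A) : R :=
  fold_right (fun a s => F a + s) 0 l.

Lemma lsum_nonneg {A} (F : A -> R) l : (forall x, In x l -> 0 <= F x) -> 0 <= lsum F l.
Proof.
  induction l as [|a l IH]; simpl; intros HF; [lra|].
  pose proof (HF a (or_introl eq_refl)). pose proof (IH (fun x Hx => HF x (or_intror Hx))). lra.
Qed.

Lemma lsum_le {A} (F G : A -> R) l : (forall x, In x l -> F x <= G x) -> lsum F l <= lsum G l.
Proof.
  induction l as [|a l IH]; simpl; intros HFG; [lra|].
  pose proof (HFG a (or_introl eq_refl)). pose proof (IH (fun x Hx => HFG x (or_intror Hx))). lra.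
Qed.

Lemma lsum_ext {A} (F G : A -> R) l : (forall x, F x = G x) -> lsum F l = lsum G l.
Proof. intros HFG; induction l; simpl; auto. rewrite HFG, IHl; auto. Qed.

Lemma lsum_plus {A} (F G : A -> R) l : lsum (fun x => F x + G x) l = lsum F l + lsum G l.
Proof. induction l; simpl; [lra|]. rewrite IHl; ring. Qed.

Lemma lsum_le_const {A} (F : A -> R) K l :
  (forall x, F x <= K) -> lsum F l <= K * INR (length l).
Proof.
  intros HF; induction l; unfold lsum in *; cbn [fold_right length] in *.
  - rewrite Rmult_0_r; lra.
  - pose proof (HF a). rewrite S_INR. nra.
Qed.

Lemma lsum_map {A B} (F : B -> R) (r : A -> B) l : lsum F (map r l) = lsum (fun x => F (r x)) l.
Proof. induction l; simpl; auto. rewrite IHl; auto. Qed.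

Lemma lsum_app {A} (F : A -> R) l1 l2 : lsum F (l1 ++ l2) = lsum F l1 + lsum F l2.
Proof. induction l1; simpl; [lra|]. rewrite IHl1; ring. Qed.

Lemma lsum_ge_In {A} (F : A -> R) l x : In x l -> (forall y, 0 <= F y) -> F x <= lsum F l.
Proof.
  induction l as [|a l IH]; simpl; [tauto|]. intros [<-|Hx] HF.
  - pose proof (lsum_nonneg F l (fun y _ => HF y)). lra.
  - pose proof (IH Hx HF). pose proof (HF a). lra.
Qed.

Lemma lsum_le_incl {A} (F : A -> R) (l1 l2 : list A) :
  NoDup l1 -> incl l1 l2 -> (forall x, 0 <= F x) -> lsum F l1 <= lsum F l2.
Proof.
  revert l2; induction l1 as [|a l1 IH]; intros l2 Hnd Hinc HF; simpl.
  - apply lsum_nonneg; auto.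
  - inversion Hnd as [|? ? Hna Hnd']; subst.
    destruct (in_split a l2 (Hinc a (or_introl eq_refl))) as [la [lb ->]].
    rewrite lsum_app; simpl.
    assert (Hrest : lsum F l1 <= lsum F (la ++ lb)).
    { apply IH; auto. intros x Hx. assert (Hx2 := Hinc x (or_intror Hx)).
      apply in_app_or in Hx2. apply in_or_app. destruct Hx2 as [?|[?|?]]; auto.
      subst; contradiction. }
    rewrite lsum_app in Hrest. lra.
Qed.

(** * Weighted sums over balls *)

Section WeightedSum.
Variable Idx : Type.
Variable B : nat -> list Idx.
Variable eps : R.
Hypothesis eps_ge0 : 0 <= eps.
Hypothesis B_summable : ex_series (fun n => exp (- (eps * INR n)) * INR (length (B n))).

Definition weight (n : nat) := exp (- (eps * INR n)).

Definition wsum (F : Idx -> R) : R := Series (fun n => weight n * lsum F (B n)).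

Definition shifts_balls (r : Idx -> Idx) :=
  (forall n i, In i (B n) -> In (r i) (B (S n))) /\ Injective r.

Lemma weight_pos n : 0 < weight n.
Proof. apply exp_pos. Qed.

Lemma weight_le1 n : weight n <= 1.
Proof.
  unfold weight. rewrite <- exp_0. destruct (Req_dec (eps * INR n) 0) as [E|E].
  - rewrite E, Ropp_0; lra.
  - left; apply exp_increasing. pose proof (pos_INR n). nra.
Qed.

Lemma weight_S n : weight (S n) = exp (- eps) * weight n.
Proof. unfold weight. rewrite <- exp_plus. f_equal. rewrite S_INR; ring. Qed.

Lemma weight_0 : weight 0 = 1.
Proof. unfold weight. simpl. rewrite Rmult_0_r, Ropp_0, exp_0; auto. Qed.

Lemma ex_wsum (F : Idx -> R) : (forall i, 0 <= F i <= 1) ->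
  ex_series (fun n => weight n * lsum F (B n)).
Proof.
  intros HF.
  apply ex_series_le_nonneg with (b := fun n => exp (- (eps * INR n)) * INR (length (B n))).
  - intros n. pose proof (weight_pos n). split.
    + apply Rmult_le_pos; [lra|]. apply lsum_nonneg; intros; apply HF.
    + pose proof (lsum_le_const F 1 (B n) (fun x => proj2 (HF x))).
      unfold weight in *. nra.
  - exact B_summable.
Qed.

Lemma wsum_nonneg F : (forall i, 0 <= F i <= 1) -> 0 <= wsum F.
Proof.
  intros HF. apply Series_nonneg; [|apply ex_wsum; auto].
  intros n; apply Rmult_le_pos; [left; apply weight_pos|]. apply lsum_nonneg; intros; apply HF.
Qed.

Lemma wsum_ext F G : (forall i, F i = G i) -> wsum F = wsum G.
Proof. intros HFG; apply Series_ext; intros n; rewrite (lsum_ext F G); auto. Qed.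

Lemma wsum_zero : wsum (fun _ => 0) = 0.
Proof.
  assert (Hl : forall l : list Idx, lsum (fun _ => 0) l = 0) by (induction l; simpl; lra).
  unfold wsum. rewrite (Series_ext _ (fun n => 0 * weight n)).
  - rewrite Series_scal_l; ring.
  - intros n; rewrite Hl; ring.
Qed.

Lemma wsum_plus F G : (forall i, 0 <= F i <= 1) -> (forall i, 0 <= G i <= 1) ->
  wsum (fun i => F i + G i) = wsum F + wsum G.
Proof.
  intros HF HG. unfold wsum. rewrite <- Series_plus by (apply ex_wsum; auto).
  apply Series_ext; intros n. rewrite lsum_plus; ring.
Qed.

Lemma wsum_ge_ball0 F i0 : (forall i, 0 <= F i <= 1) -> In i0 (B 0) -> F i0 <= wsum F.
Proof.
  intros HF Hi0. unfold wsum. rewrite Series_incr_1 by (apply ex_wsum; auto).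
  rewrite weight_0, Rmult_1_l.
  pose proof (lsum_ge_In F (B 0) i0 Hi0 (fun y => proj1 (HF y))).
  assert (0 <= Series (fun k => weight (S k) * lsum F (B (S k)))); [|lra].
  apply Series_nonneg.
  - intros n; apply Rmult_le_pos; [left; apply weight_pos|]. apply lsum_nonneg; intros; apply HF.
  - apply (proj1 (ex_series_incr_n (fun n => weight n * lsum F (B n)) 1)). apply ex_wsum; auto.
Qed.

(* Each ball B(n) goes injectively into B(n+1), whose weight is e^{-ε} times smaller. *)
Lemma wsum_shift F (r : Idx -> Idx) : (forall n, NoDup (B n)) -> (forall i, 0 <= F i <= 1) ->
  shifts_balls r -> wsum (fun i => F (r i)) <= exp eps * wsum F.
Proof.
  intros Bnd HF [Hr Hinj].
  assert (Hex : ex_series (fun n => weight n * lsum F (B n))) by (apply ex_wsum; auto).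
  unfold wsum at 2. rewrite Series_incr_1 by auto.
  assert (Hle : wsum (fun i => F (r i)) <=
                Series (fun n => exp eps * (weight (S n) * lsum F (B (S n))))).
  { apply Series_le.
    - intros n. pose proof (weight_pos n). split.
      + apply Rmult_le_pos; [lra|]. apply lsum_nonneg; intros; apply HF.
      + rewrite weight_S, <- Rmult_assoc, <- Rmult_assoc, <- exp_plus, Rplus_opp_r, exp_0,
          Rmult_1_l.
        apply Rmult_le_compat_l; [lra|].
        rewrite <- lsum_map. apply lsum_le_incl.
        * apply Injective_map_NoDup; auto.
        * intros x Hx. apply in_map_iff in Hx. destruct Hx as [y [<- Hy]]. auto.
        * intros; apply HF.
    - apply (ex_series_scal_l (exp eps) (fun n => weight (S n) * lsum F (B (S n)))).
      apply (proj1 (ex_series_incr_n (fun n => weight n * lsum F (B n)) 1)). exact Hex. }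
  rewrite Series_scal_l in Hle.
  pose proof (exp_pos eps).
  assert (0 <= weight 0 * lsum F (B 0)).
  { apply Rmult_le_pos; [left; apply weight_pos|]. apply lsum_nonneg; intros; apply HF. }
  nra.
Qed.

Section Smallness.
Variables (Y : Type) (Fy : Y -> Idx -> R) (d : Y -> R).
Hypothesis Fy_range : forall y i, 0 <= Fy y i <= 1.
Hypothesis Fy_small : forall i eta, 0 < eta ->
  exists delta, 0 < delta /\ forall y, d y < delta -> Fy y i < eta.

Lemma lsum_small (L : list Idx) : forall eta, 0 < eta ->
  exists delta, 0 < delta /\ forall y, d y < delta -> lsum (Fy y) L < eta.
Proof.
  induction L as [|a L IH]; intros eta Heta.
  - exists 1; split; [lra|]; intros; simpl; lra.
  - destruct (Fy_small a (eta/2)) as [d1 [Hd1 H1]]; [lra|].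
    destruct (IH (eta/2)) as [d2 [Hd2 H2]]; [lra|].
    exists (Rmin d1 d2); split; [apply Rmin_glb_lt; auto|].
    intros y Hy. simpl. pose proof (H1 y (Rlt_le_trans _ _ _ Hy (Rmin_l _ _))).
    pose proof (H2 y (Rlt_le_trans _ _ _ Hy (Rmin_r _ _))). lra.
Qed.

Lemma partial_wsum_small N : forall eta, 0 < eta -> exists delta, 0 < delta /\
  forall y, d y < delta -> sum_f_R0 (fun n => weight n * lsum (Fy y) (B n)) N < eta.
Proof.
  induction N as [|N IH]; intros eta Heta.
  - destruct (lsum_small (B 0) eta Heta) as [dl [Hdl Hl]].
    exists dl; split; auto; intros y Hy; simpl.
    pose proof (Hl y Hy). rewrite weight_0. lra.
  - destruct (lsum_small (B (S N)) (eta/2)) as [d1 [Hd1 H1]]; [lra|].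
    destruct (IH (eta/2)) as [d2 [Hd2 H2]]; [lra|].
    exists (Rmin d1 d2); split; [apply Rmin_glb_lt; auto|].
    intros y Hy. simpl. pose proof (H1 y (Rlt_le_trans _ _ _ Hy (Rmin_l _ _))).
    pose proof (H2 y (Rlt_le_trans _ _ _ Hy (Rmin_r _ _))).
    pose proof (weight_le1 (S N)). pose proof (weight_pos (S N)).
    assert (0 <= lsum (Fy y) (B (S N))) by (apply lsum_nonneg; intros; apply Fy_range). nra.
Qed.

(* Split the series into a finite part and a uniformly small tail. *)
Lemma wsum_small : forall eta, 0 < eta ->
  exists delta, 0 < delta /\ forall y, d y < delta -> wsum (Fy y) < eta.
Proof.
  intros eta Heta.
  assert (Hex1 : ex_series (fun n => weight n * lsum (fun _ => 1) (B n))) by (apply ex_wsum; intros; lra).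
  destruct (Series_tail_small _ Hex1 (eta/2)) as [N HN]; [lra|].
  destruct (partial_wsum_small N (eta/2)) as [dl [Hdl Hl]]; [lra|].
  exists dl; split; auto. intros y Hy. unfold wsum.
  rewrite (Series_incr_n _ (S N)) by (lia || (apply ex_wsum; auto)).
  simpl pred. pose proof (Hl y Hy).
  assert (Series (fun k => weight (S N + k) * lsum (Fy y) (B (S N + k))) <=
          Series (fun k => weight (S N + k) * lsum (fun _ => 1) (B (S N + k)))).
  { apply Series_le.
    - intros n; pose proof (weight_pos (S N + n)). split.
      + apply Rmult_le_pos; [lra|]. apply lsum_nonneg; intros; apply Fy_range.
      + apply Rmult_le_compat_l; [lra|]. apply lsum_le; intros; apply Fy_range.
    - apply (proj1 (ex_series_incr_n (fun n => weight n * lsum (fun _ => 1) (B n)) (S N))), Hex1. }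
  pose proof (Rle_abs (Series (fun k => weight (S N + k) * lsum (fun _ => 1) (B (S N + k))))).
  lra.
Qed.

End Smallness.

End WeightedSum.

Lemma continuity_pt_intro (f : R -> R) x :
  (forall eps, 0 < eps -> exists delta, 0 < delta /\
     forall y, Rabs (y - x) < delta -> Rabs (f y - f x) < eps) ->
  continuity_pt f x.
Proof.
  intros Hf eps Heps. destruct (Hf eps Heps) as [d [Hd Hy]].
  exists d; split; auto. intros y [_ Hy']. simpl in *. unfold R_dist in *. apply Hy; auto.
Qed.

Definition clamp (p q t : R) := Rmax p (Rmin q t).

Lemma clamp_in p q t : p <= q -> p <= clamp p q t <= q.
Proof. intros; unfold clamp, Rmax, Rmin; repeat destruct Rle_dec; lra. Qed.

Lemma clamp_id p q t : p <= t <= q -> clamp p q t = t.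
Proof. intros; unfold clamp, Rmax, Rmin; repeat destruct Rle_dec; lra. Qed.

Lemma clamp_lip p q s t : Rabs (clamp p q s - clamp p q t) <= Rabs (s - t).
Proof. unfold clamp, Rmax, Rmin, Rabs; repeat destruct Rle_dec; repeat destruct Rcase_abs; lra. Qed.

Lemma clamp_cont p q t : continuity_pt (clamp p q) t.
Proof.
  apply continuity_pt_intro. intros e He; exists e; split; auto; intros y Hy.
  pose proof (clamp_lip p q y t); lra.
Qed.

Lemma IVT_on (f : R -> R) p q : p <= q -> (forall t, p <= t <= q -> continuity_pt f t) ->
  f p * f q <= 0 -> exists z, p <= z <= q /\ f z = 0.
Proof.
  intros Hpq Hc Hs.
  set (g := fun t => f (clamp p q t)).
  assert (Hg : continuity g).
  { intros t. apply (continuity_pt_comp (clamp p q) f); [apply clamp_cont|].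
    apply Hc, clamp_in; auto. }
  destruct (IVT_cor g p q Hg Hpq) as [z [Hz Hgz]].
  { unfold g. rewrite !clamp_id by lra. auto. }
  exists z; split; auto. unfold g in Hgz. rewrite clamp_id in Hgz; auto.
Qed.

Section ContinuousInjective.
Variables (f : R -> R) (a b : R).
Hypothesis ab : a < b.
Hypothesis f_cont : forall t, a <= t <= b -> continuity_pt f t.
Hypothesis f_inj : forall x y, a <= x <= b -> a <= y <= b -> f x = f y -> x = y.

(* If f x >= f y for some x < y, the segment from (a, b) to (x, y) in the triangle
   {s < t} hits the diagonal of f, contradicting injectivity. *)
Lemma cont_inj_increasing : f a < f b ->
  forall x y, a <= x <= b -> a <= y <= b -> x < y -> f x < f y.
Proof.
  intros Hfab x y Hx Hy Hxy.
  destruct (Rlt_le_dec (f x) (f y)) as [?|Hle]; auto. exfalso.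
  set (s := fun t => f (b + t * (y - b)) - f (a + t * (x - a))).
  assert (Hlin : forall c d, continuity (fun t => c + t * (d - c))).
  { intros c d. apply continuity_plus; [apply continuity_const; intros ? ?; auto|].
    apply continuity_mult; [apply derivable_continuous, derivable_id|].
    apply continuity_const; intros ? ?; auto. }
  assert (Hs : forall t, 0 <= t <= 1 -> continuity_pt s t).
  { intros t Ht. apply continuity_pt_minus.
    - apply (continuity_pt_comp (fun t => b + t * (y - b)) f); [apply Hlin|apply f_cont; nra].
    - apply (continuity_pt_comp (fun t => a + t * (x - a)) f); [apply Hlin|apply f_cont; nra]. }
  destruct (IVT_on s 0 1 ltac:(lra) Hs) as [t [Ht Hst]].
  { unfold s. replace (b + 0 * (y - b)) with b by ring. replace (a + 0 * (x - a)) with a by ring.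
    replace (b + 1 * (y - b)) with y by ring. replace (a + 1 * (x - a)) with x by ring.
    assert (f b - f a > 0) by lra. assert (f y - f x <= 0) by lra. nra. }
  assert (E : b + t * (y - b) = a + t * (x - a)) by (apply f_inj; [nra|nra|unfold s in Hst; lra]).
  nra.
Qed.

End ContinuousInjective.

Lemma cont_inj_monotone (f : R -> R) a b : a < b ->
  (forall t, a <= t <= b -> continuity_pt f t) ->
  (forall x y, a <= x <= b -> a <= y <= b -> f x = f y -> x = y) ->
  (forall x y, a <= x <= b -> a <= y <= b -> x < y -> f x < f y) \/
  (forall x y, a <= x <= b -> a <= y <= b -> x < y -> f y < f x).
Proof.
  intros Hab Hc Hi. destruct (Rtotal_order (f a) (f b)) as [H|[H|H]].
  - left; apply cont_inj_increasing; auto.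
  - apply Hi in H; lra.
  - right. intros x y Hx Hy Hxy.
    enough (- f x < - f y) by lra.
    apply (cont_inj_increasing (fun t => - f t) a b); auto; try lra.
    + intros t Ht. apply continuity_pt_opp; auto.
    + intros u w Hu Hw E. apply Hi; auto; lra.
Qed.

(** * Oriented arcs of the circle *)

(* Length of the counterclockwise arc from x to y, for coordinates in [0, 1). *)
Definition ccw (x y : R) : R := if Rle_dec x y then y - x else y - x + 1.

Ltac ccw_cases :=
  unfold ccw in *;
  repeat match goal with
  | |- context [Rle_dec ?a ?b] => destruct (Rle_dec a b); try (exfalso; lra)
  | H : context [Rle_dec ?a ?b] |- _ => destruct (Rle_dec a b); try (exfalso; lra)
  end; try lra.

Lemma ccw_range x y : 0 <= x < 1 -> 0 <= y < 1 -> 0 <= ccw x y < 1.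
Proof. intros; ccw_cases. Qed.

Lemma ccw_diag x : ccw x x = 0.
Proof. ccw_cases. Qed.

Lemma ccw_eq0 x y : 0 <= x < 1 -> 0 <= y < 1 -> ccw x y = 0 -> x = y.
Proof. intros; ccw_cases. Qed.

Lemma ccw_swap x y : 0 <= x < 1 -> 0 <= y < 1 -> x <> y -> ccw x y + ccw y x = 1.
Proof. intros. destruct (Rtotal_order x y) as [?|[?|?]]; [|contradiction|]; ccw_cases. Qed.

Lemma ccw_shift c p q : 0 <= c < 1 -> 0 <= p < 1 -> 0 <= q < 1 ->
  ccw (ccw c p) (ccw c q) = ccw p q.
Proof. intros; ccw_cases. Qed.

(* [ccw x y + ccw y z = ccw x z] says that y lies on the ccw arc from x to z; it depends
   only on the relative order of x, y, z. *)
Lemma ccw_add_order x y z X Y Z :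
  0 <= x < 1 -> 0 <= y < 1 -> 0 <= z < 1 -> 0 <= X < 1 -> 0 <= Y < 1 -> 0 <= Z < 1 ->
  (x < y -> X < Y) -> (y < x -> Y < X) -> (x = y -> X = Y) ->
  (y < z -> Y < Z) -> (z < y -> Z < Y) -> (y = z -> Y = Z) ->
  (x < z -> X < Z) -> (z < x -> Z < X) -> (x = z -> X = Z) ->
  ccw x y + ccw y z = ccw x z -> ccw X Y + ccw Y Z = ccw X Z.
Proof.
  intros.
  destruct (Rtotal_order x y) as [Q1|[Q1|Q1]];
  [pose proof (ltac:(auto) : X < Y)|pose proof (ltac:(auto) : X = Y)|pose proof (ltac:(auto) : Y < X)];
  (destruct (Rtotal_order y z) as [Q2|[Q2|Q2]];
  [pose proof (ltac:(auto) : Y < Z)|pose proof (ltac:(auto) : Y = Z)|pose proof (ltac:(auto) : Z < Y)]);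
  (destruct (Rtotal_order x z) as [Q3|[Q3|Q3]];
  [pose proof (ltac:(auto) : X < Z)|pose proof (ltac:(auto) : X = Z)|pose proof (ltac:(auto) : Z < X)]);
  try (exfalso; lra); ccw_cases.
Qed.

(* [ccw X 0] is the coordinate of the reflection X ↦ -X of the circle. *)
Lemma ccw_reflect_range X : 0 <= X < 1 -> 0 <= ccw X 0 < 1.
Proof. intros; ccw_cases. Qed.

Lemma ccw_reflect Y Z : 0 <= Y < 1 -> 0 <= Z < 1 -> ccw Z Y = ccw (ccw Y 0) (ccw Z 0).
Proof. intros; ccw_cases. Qed.

Lemma ccw_reflect_lt x y X Y : 0 <= x < 1 -> 0 <= y < 1 -> 0 <= X < 1 -> 0 <= Y < 1 ->
  (x = 0 -> X = 0) -> (0 < y -> 0 < Y) -> (0 < x -> x < y -> Y < X) ->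
  x < y -> ccw X 0 < ccw Y 0.
Proof.
  intros Hx Hy HX HY H0 Hpos Hrev Hxy.
  destruct (Req_dec x 0) as [E|E].
  - rewrite (H0 E). assert (0 < Y) by (apply Hpos; lra). ccw_cases.
  - assert (Y < X) by (apply Hrev; lra). assert (0 < Y) by (apply Hpos; lra). ccw_cases.
Qed.

Lemma ccw_add_order_rev x y z X Y Z :
  0 <= x < 1 -> 0 <= y < 1 -> 0 <= z < 1 -> 0 <= X < 1 -> 0 <= Y < 1 -> 0 <= Z < 1 ->
  (x = 0 -> X = 0) -> (0 < x -> 0 < X) ->
  (y = 0 -> Y = 0) -> (0 < y -> 0 < Y) ->
  (z = 0 -> Z = 0) -> (0 < z -> 0 < Z) ->
  (0 < x -> x < y -> Y < X) -> (0 < y -> y < x -> X < Y) -> (x = y -> X = Y) ->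
  (0 < y -> y < z -> Z < Y) -> (0 < z -> z < y -> Y < Z) -> (y = z -> Y = Z) ->
  (0 < x -> x < z -> Z < X) -> (0 < z -> z < x -> X < Z) -> (x = z -> X = Z) ->
  ccw x y + ccw y z = ccw x z -> ccw Z Y + ccw Y X = ccw Z X.
Proof.
  intros.
  rewrite (ccw_reflect Y Z), (ccw_reflect X Y), (ccw_reflect X Z), Rplus_comm by auto.
  apply (ccw_add_order x y z); auto using ccw_reflect_range;
    solve [ intros; apply (ccw_reflect_lt x y) + apply (ccw_reflect_lt y x)
                  + apply (ccw_reflect_lt y z) + apply (ccw_reflect_lt z y)
                  + apply (ccw_reflect_lt x z) + apply (ccw_reflect_lt z x); auto
          | intros E; subst; f_equal; auto ].
Qed.

Definition cont_inj (M : cc1) (g : pt M -> pt M) := mcontinuous M g /\ Injective g.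

Lemma mcontinuous_comp M (f g : pt M -> pt M) :
  mcontinuous M f -> mcontinuous M g -> mcontinuous M (fun x => f (g x)).
Proof.
  intros Hf Hg x e He. destruct (Hf (g x) e He) as [d1 [Hd1 H1]].
  destruct (Hg x d1 Hd1) as [d2 [Hd2 H2]]. exists d2; split; auto.
Qed.

Lemma mcontinuous_id M : mcontinuous M (fun x => x).
Proof. intros x e He. exists e; split; auto. Qed.

Lemma cont_inj_comp M (g s : pt M -> pt M) :
  cont_inj M g -> cont_inj M s -> cont_inj M (fun x => g (s x)).
Proof.
  intros [gc gi] [sc si]. split; [apply mcontinuous_comp; auto|].
  intros x y E; apply si, gi, E.
Qed.

Lemma is_homeo_cont_inj M (f : pt M -> pt M) : is_homeo M f -> cont_inj M f.
Proof.
  intros [fi [H1 [_ [H3 _]]]]. split; auto. intros x y E.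
  rewrite <- (H1 x), <- (H1 y), E; auto.
Qed.

Definition PC := pt Circle.
Definition v (p : PC) : R := proj1_sig p.

Lemma v_range (p : PC) : 0 <= v p < 1.
Proof. exact (proj2_sig p). Qed.

Lemma v_inj (p q : PC) : v p = v q -> p = q.
Proof.
  destruct p as [x hx], q as [y hy]; unfold v; simpl; intros ->.
  f_equal; apply proof_irrelevance.
Qed.

Definition p0 : PC := exist (fun x => 0 <= x < 1) 0 (conj (Rle_refl 0) Rlt_0_1).

Lemma v_p0 : v p0 = 0.
Proof. reflexivity. Qed.

(* Junk value [p0] outside [0, 1). *)
Definition emb (t : R) : PC :=
  match Rle_dec 0 t with
  | left H1 => match Rlt_dec t 1 with
               | left H2 => exist (fun x => 0 <= x < 1) t (conj H1 H2)
               | right _ => p0 end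
  | right _ => p0 end.

Lemma v_emb t : 0 <= t < 1 -> v (emb t) = t.
Proof.
  intros [H1 H2]. unfold emb. destruct (Rle_dec 0 t); [|contradiction].
  destruct (Rlt_dec t 1); [reflexivity|contradiction].
Qed.

Lemma emb_v p : emb (v p) = p.
Proof. apply v_inj. apply v_emb, v_range. Qed.

Lemma emb0 : emb 0 = p0.
Proof. exact (emb_v p0). Qed.

Lemma dist_ccw (p q : PC) : Defs.dist Circle p q = Rmin (ccw (v p) (v q)) (ccw (v q) (v p)).
Proof.
  pose proof (v_range p); pose proof (v_range q). simpl. fold (v p) (v q).
  unfold Rmin, Rabs; repeat destruct Rle_dec; repeat destruct Rcase_abs; ccw_cases.
Qed.

Lemma dist_sym_circle (p q : PC) : Defs.dist Circle p q = Defs.dist Circle q p.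
Proof. rewrite !dist_ccw. apply Rmin_comm. Qed.

Lemma dist_le_ccw a b : Defs.dist Circle a b <= ccw (v a) (v b).
Proof. rewrite dist_ccw. apply Rmin_l. Qed.

Lemma dist_circle_nonneg a b : 0 <= Defs.dist Circle a b.
Proof.
  rewrite dist_ccw. pose proof (ccw_range (v a) (v b) (v_range a) (v_range b)).
  pose proof (ccw_range (v b) (v a) (v_range b) (v_range a)). unfold Rmin; destruct Rle_dec; lra.
Qed.

Lemma ccw_pos (a b : PC) : a <> b -> 0 < ccw (v a) (v b).
Proof.
  intros Hab. destruct (ccw_range (v a) (v b) (v_range a) (v_range b)) as [[?|E] _]; auto.
  symmetry in E; apply ccw_eq0 in E; auto using v_range. apply v_inj in E; contradiction.
Qed.

(* Measuring coordinates from c is continuous away from c. *)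
Lemma ccw_cont c V W eta : 0 <= c < 1 -> 0 <= V < 1 -> 0 <= W < 1 -> V <> c -> 0 < eta ->
  Rmin (ccw V W) (ccw W V) < Rmin eta (Rmin (ccw c V) (ccw V c)) ->
  Rabs (ccw c W - ccw c V) < eta.
Proof.
  intros. unfold Rmin in *. repeat destruct Rle_dec; unfold Rabs; destruct Rcase_abs; ccw_cases.
Qed.

Definition between (x y z : PC) := ccw (v x) (v y) + ccw (v y) (v z) = ccw (v x) (v z).

Definition orient_pres (g : PC -> PC) :=
  forall x y z, between x y z -> between (g x) (g y) (g z).

Definition orient_rev (g : PC -> PC) :=
  forall x y z, between x y z -> between (g z) (g y) (g x).

Section Orientation.
Variable g : PC -> PC.
Hypothesis g_ci : cont_inj Circle g.

(* Coordinates of g, measured from g p0, read along the fundamental domain. *)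
Let c := v (g p0).
Let U (x : PC) := ccw c (v (g x)).
Let u (t : R) := U (emb t).

Lemma U_range x : 0 <= U x < 1.
Proof. apply ccw_range; apply v_range. Qed.

Lemma U_p0 : U p0 = 0.
Proof. apply ccw_diag. Qed.

Lemma U_inj x y : U x = U y -> x = y.
Proof.
  intros H. apply (proj2 g_ci), v_inj. unfold U in H.
  pose proof (v_range (g x)). pose proof (v_range (g y)). pose proof (v_range (g p0)).
  fold c in H. unfold ccw in H. repeat destruct Rle_dec; lra.
Qed.

Lemma U_pos x : 0 < v x -> 0 < U x.
Proof.
  intros H. destruct (U_range x) as [[?|E] _]; auto.
  rewrite <- U_p0 in E. apply U_inj in E. subst. rewrite v_p0 in H; lra.
Qed.

Lemma ccw_g_U x y : ccw (v (g x)) (v (g y)) = ccw (U x) (U y).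
Proof. unfold U. rewrite ccw_shift; auto; apply v_range. Qed.

Lemma U_u x : U x = u (v x).
Proof. unfold u. rewrite emb_v; auto. Qed.

Lemma u_cont t : 0 < t < 1 -> continuity_pt u t.
Proof.
  intros Ht. apply continuity_pt_intro. intros eta Heta.
  set (V := v (g (emb t))).
  assert (HV : V <> c).
  { intros E. assert (E' : emb t = p0) by (apply (proj2 g_ci), v_inj; exact E).
    apply (f_equal v) in E'. rewrite v_emb, v_p0 in E' by lra. lra. }
  assert (Hc := v_range (g p0)). assert (HVr := v_range (g (emb t))). fold c in Hc. fold V in HVr.
  set (m := Rmin eta (Rmin (ccw c V) (ccw V c))).
  assert (Hm : 0 < m).
  { assert (ccw c V <> 0) by (intros E; apply ccw_eq0 in E; auto).
    assert (ccw V c <> 0) by (intros E; apply ccw_eq0 in E; auto).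
    pose proof (ccw_range c V Hc HVr). pose proof (ccw_range V c HVr Hc).
    repeat apply Rmin_glb_lt; lra. }
  destruct (proj1 g_ci (emb t) m Hm) as [d1 [Hd1 Hg]].
  exists (Rmin d1 (Rmin t (1 - t))). split; [repeat apply Rmin_glb_lt; lra|].
  intros y Hy.
  assert (Hy1 := Rlt_le_trans _ _ _ Hy (Rmin_l _ _)).
  assert (Hy2 := Rlt_le_trans _ _ _ Hy (Rle_trans _ _ _ (Rmin_r _ _) (Rmin_l _ _))).
  assert (Hy3 := Rlt_le_trans _ _ _ Hy (Rle_trans _ _ _ (Rmin_r _ _) (Rmin_r _ _))).
  assert (Hyr : 0 <= y < 1) by (unfold Rabs in *; destruct Rcase_abs; lra).
  assert (Hd : Defs.dist Circle (emb t) (emb y) < d1).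
  { rewrite dist_ccw, v_emb, v_emb by lra. unfold Rmin, Rabs in *.
    repeat destruct Rle_dec; repeat destruct Rcase_abs; ccw_cases. }
  specialize (Hg _ Hd). rewrite dist_ccw in Hg. fold V in Hg.
  apply ccw_cont; auto; apply v_range.
Qed.

Lemma u_monotone :
  (forall x y, 0 < x < 1 -> 0 < y < 1 -> x < y -> u x < u y) \/
  (forall x y, 0 < x < 1 -> 0 < y < 1 -> x < y -> u y < u x).
Proof.
  assert (Hpair : forall x y, 0 < x < 1 -> 0 < y < 1 -> x < y ->
    (u x < u y /\ u (1/4) < u (3/4)) \/ (u y < u x /\ u (3/4) < u (1/4))).
  { intros x y Hx Hy Hxy.
    set (a := Rmin x (1/4)). set (b := Rmax y (3/4)).
    assert (Hab : 0 < a /\ a <= x /\ a <= 1/4 /\ y <= b /\ 3/4 <= b /\ b < 1)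
      by (unfold a, b, Rmin, Rmax; repeat destruct Rle_dec; lra).
    destruct (cont_inj_monotone u a b) as [M|M]; [lra| intros t Ht; apply u_cont; lra | | |].
    - intros s t Hs Ht E. apply U_inj in E.
      rewrite <- (v_emb s), <- (v_emb t), E by lra; auto.
    - left; split; apply M; lra.
    - right; split; apply M; lra. }
  assert (Hquarter : u (1/4) <> u (3/4)).
  { intros E. apply U_inj in E. apply (f_equal v) in E. rewrite !v_emb in E; lra. }
  destruct (Rlt_dec (u (1/4)) (u (3/4))); [left|right]; intros x y Hx Hy Hxy;
    destruct (Hpair x y Hx Hy Hxy); lra.
Qed.

Lemma orientation_dichotomy : orient_pres g \/ orient_rev g.
Proof.
  assert (Ueq : forall p q : PC, v p = v q -> U p = U q).
  { intros p q E; apply v_inj in E; subst; auto. }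
  destruct u_monotone as [Inc|Dec]; [left|right]; intros x y z H; unfold between;
    rewrite !ccw_g_U.
  - assert (Ult : forall p q : PC, v p < v q -> U p < U q).
    { intros p q Hpq. pose proof (v_range p). pose proof (v_range q).
      destruct (Req_dec (v p) 0) as [E|E].
      + replace p with p0 by (apply v_inj; auto). rewrite U_p0. apply U_pos; lra.
      + rewrite !U_u. apply Inc; lra. }
    apply (ccw_add_order (v x) (v y) (v z)); auto using v_range, U_range.
  - assert (Ugt : forall p q : PC, 0 < v p -> v p < v q -> U q < U p).
    { intros p q Hp Hpq. pose proof (v_range p). pose proof (v_range q).
      rewrite !U_u. apply Dec; lra. }
    assert (U0 : forall p : PC, v p = 0 -> U p = 0).
    { intros p E. replace p with p0 by (apply v_inj; auto). apply U_p0. }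
    apply (ccw_add_order_rev (v x) (v y) (v z)); auto using v_range, U_range, U_pos.
Qed.

End Orientation.

(* Otherwise the three arcs cut out by the images of 0, 1/3, 2/3 would have total length
   both 1 and 2. *)
Lemma not_orient_pres_rev g : Injective g -> orient_pres g -> orient_rev g -> False.
Proof.
  intros gi Hp Hr.
  set (a := emb (1/3)). set (b := emb (2/3)).
  assert (Hv : v a = 1/3 /\ v b = 2/3) by (split; apply v_emb; lra).
  assert (H : between p0 a b) by (unfold between; rewrite v_p0, (proj1 Hv), (proj2 Hv); ccw_cases).
  specialize (Hp _ _ _ H). specialize (Hr _ _ _ H). unfold between in Hp, Hr.
  assert (Hne : forall x y, v x <> v y -> v (g x) <> v (g y))
    by (intros x y Hxy E; apply Hxy, f_equal, gi, v_inj, E).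
  pose proof (ccw_swap _ _ (v_range (g p0)) (v_range (g a)) ltac:(apply Hne; rewrite v_p0; lra)).
  pose proof (ccw_swap _ _ (v_range (g a)) (v_range (g b)) ltac:(apply Hne; lra)).
  pose proof (ccw_swap _ _ (v_range (g p0)) (v_range (g b)) ltac:(apply Hne; rewrite v_p0; lra)).
  lra.
Qed.

(* The length of the image under g of the ccw arc from a to b (reversed if g reverses
   orientation). *)
Definition ell (g : PC -> PC) (a b : PC) : R :=
  if excluded_middle_informative (orient_pres g) then ccw (v (g a)) (v (g b))
  else ccw (v (g b)) (v (g a)).

Lemma ell_range g a b : 0 <= ell g a b < 1.
Proof. unfold ell; destruct excluded_middle_informative; apply ccw_range; apply v_range. Qed.

Lemma ell_diag g a : ell g a a = 0.
Proof. unfold ell; destruct excluded_middle_informative; apply ccw_diag. Qed.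

Lemma ell_cases g a b :
  ell g a b = ccw (v (g a)) (v (g b)) \/ ell g a b = ccw (v (g b)) (v (g a)).
Proof. unfold ell; destruct excluded_middle_informative; auto. Qed.

Lemma ell_swap g a b : Injective g -> a <> b -> ell g a b + ell g b a = 1.
Proof.
  intros gi Hab. assert (v (g a) <> v (g b)) by (intros E; apply v_inj, gi in E; auto).
  unfold ell; destruct excluded_middle_informative;
    [|rewrite Rplus_comm]; apply ccw_swap; auto using v_range.
Qed.

Lemma ell_add g a b c : cont_inj Circle g -> between a b c -> ell g a b + ell g b c = ell g a c.
Proof.
  intros Hg H. unfold ell; destruct excluded_middle_informative as [P|P].
  - apply P, H.
  - destruct (orientation_dichotomy g Hg) as [Q|Q]; [contradiction|].
    rewrite Rplus_comm. apply Q, H.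
Qed.

Lemma ell_id g a b : (forall x, g x = x) -> ell g a b = ccw (v a) (v b).
Proof.
  intros Hg. unfold ell; destruct excluded_middle_informative as [P|P].
  - rewrite !Hg; auto.
  - exfalso; apply P. intros x y z. unfold between. rewrite !Hg; auto.
Qed.

Lemma ell_comp_pres g s a b : cont_inj Circle g -> cont_inj Circle s -> orient_pres s ->
  ell (fun x => g (s x)) a b = ell g (s a) (s b).
Proof.
  intros Hg Hs Ps.
  assert (Xgs := not_orient_pres_rev _ (proj2 (cont_inj_comp _ g s Hg Hs))).
  assert (Xg := not_orient_pres_rev g (proj2 Hg)).
  unfold ell. destruct (orientation_dichotomy g Hg) as [Pg|Rg].
  - assert (P : orient_pres (fun x => g (s x))) by (intros x y z H; apply Pg, Ps, H).
    do 2 destruct excluded_middle_informative; tauto.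
  - assert (R : orient_rev (fun x => g (s x))) by (intros x y z H; apply Rg, Ps, H).
    do 2 destruct excluded_middle_informative; tauto.
Qed.

Lemma ell_comp_rev g s a b : cont_inj Circle g -> cont_inj Circle s -> orient_rev s ->
  ell (fun x => g (s x)) a b = ell g (s b) (s a).
Proof.
  intros Hg Hs Rs.
  assert (Xgs := not_orient_pres_rev _ (proj2 (cont_inj_comp _ g s Hg Hs))).
  assert (Xg := not_orient_pres_rev g (proj2 Hg)).
  unfold ell. destruct (orientation_dichotomy g Hg) as [Pg|Rg].
  - assert (R : orient_rev (fun x => g (s x))) by (intros x y z H; apply (Pg (s z) (s y) (s x)), Rs, H).
    do 2 destruct excluded_middle_informative; tauto.
  - assert (P : orient_pres (fun x => g (s x))) by (intros x y z H; apply (Rg (s z) (s y) (s x)), Rs, H).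
    do 2 destruct excluded_middle_informative; tauto.
Qed.

Definition antipode (x : PC) : PC := emb (if Rlt_dec (v x) (1/2) then v x + 1/2 else v x - 1/2).

Lemma v_antipode x : v (antipode x) = (if Rlt_dec (v x) (1/2) then v x + 1/2 else v x - 1/2).
Proof. pose proof (v_range x). unfold antipode. apply v_emb. destruct Rlt_dec; lra. Qed.


Lemma ell_lt_of_dist g a b e : Injective g -> a <> b ->
  Defs.dist Circle (g a) (g b) < e -> ell g a b <= 1 - e -> ell g a b < e.
Proof.
  intros gi Hab Hd Hle. rewrite dist_ccw in Hd.
  assert (Hn : v (g a) <> v (g b)) by (intros E; apply v_inj, gi in E; auto).
  pose proof (ccw_swap _ _ (v_range (g a)) (v_range (g b)) Hn).
  destruct (ell_cases g a b) as [E|E]; rewrite E in *; unfold Rmin in Hd; destruct Rle_dec; lra.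
Qed.

(* Additivity along the arc to the antipode z of x bounds ell g x y by ell g x z < 1, so the
   image of a short arc at x is the shorter of the two arcs between g x and g y. *)
Lemma ell_small_fwd g x : cont_inj Circle g -> forall eta, 0 < eta -> exists delta, 0 < delta /\
  forall y, ccw (v x) (v y) < delta -> ell g x y < eta.
Proof.
  intros Hg eta Heta. set (z := antipode x).
  assert (HL := ell_range g x z).
  set (e := Rmin eta (1 - ell g x z)).
  assert (He : 0 < e /\ e <= eta /\ e <= 1 - ell g x z)
    by (repeat split; [apply Rmin_glb_lt; lra | apply Rmin_l | apply Rmin_r]).
  destruct He as [He0 [He1 He2]].
  destruct (proj1 Hg x e He0) as [d1 [Hd1 H1]].
  exists (Rmin d1 (1/2)); split; [apply Rmin_glb_lt; lra|].
  intros y Hy.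
  assert (Hy1 : ccw (v x) (v y) < d1) by (eapply Rlt_le_trans; [exact Hy|apply Rmin_l]).
  assert (Hy2 : ccw (v x) (v y) < 1/2) by (eapply Rlt_le_trans; [exact Hy|apply Rmin_r]).
  destruct (classic (x = y)) as [<-|Hne]; [rewrite ell_diag; auto|].
  assert (Hadd : ell g x y + ell g y z = ell g x z).
  { apply ell_add; auto. pose proof (v_range x); pose proof (v_range y).
    unfold between, z; rewrite v_antipode. destruct Rlt_dec; ccw_cases. }
  pose proof (ell_range g y z).
  enough (ell g x y < e) by lra.
  apply ell_lt_of_dist; [apply Hg | auto | | lra].
  apply H1. eapply Rle_lt_trans; [apply dist_le_ccw|exact Hy1].
Qed.

Lemma ell_small_bwd g x : cont_inj Circle g -> forall eta, 0 < eta -> exists delta, 0 < delta /\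
  forall y, ccw (v y) (v x) < delta -> ell g y x < eta.
Proof.
  intros Hg eta Heta. set (z := antipode x).
  assert (HL := ell_range g z x).
  set (e := Rmin eta (1 - ell g z x)).
  assert (He : 0 < e /\ e <= eta /\ e <= 1 - ell g z x)
    by (repeat split; [apply Rmin_glb_lt; lra | apply Rmin_l | apply Rmin_r]).
  destruct He as [He0 [He1 He2]].
  destruct (proj1 Hg x e He0) as [d1 [Hd1 H1]].
  exists (Rmin d1 (1/2)); split; [apply Rmin_glb_lt; lra|].
  intros y Hy.
  assert (Hy1 : ccw (v y) (v x) < d1) by (eapply Rlt_le_trans; [exact Hy|apply Rmin_l]).
  assert (Hy2 : ccw (v y) (v x) < 1/2) by (eapply Rlt_le_trans; [exact Hy|apply Rmin_r]).
  destruct (classic (y = x)) as [->|Hne]; [rewrite ell_diag; auto|].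
  assert (Hadd : ell g z y + ell g y x = ell g z x).
  { apply ell_add; auto. pose proof (v_range x); pose proof (v_range y).
    unfold between, z; rewrite v_antipode. destruct Rlt_dec; ccw_cases. }
  pose proof (ell_range g z y).
  enough (ell g y x < e) by lra.
  apply ell_lt_of_dist; [apply Hg | auto | | lra].
  rewrite dist_sym_circle. apply H1.
  rewrite dist_sym_circle. eapply Rle_lt_trans; [apply dist_le_ccw|exact Hy1].
Qed.

Lemma homeo_of_inverse_lipschitz M (H : pt M -> pt M) Z :
  mcontinuous M H -> Injective H -> (forall p, exists x, H x = p) -> 0 < Z ->
  (forall a b, Defs.dist M a b <= Z * Defs.dist M (H a) (H b)) ->
  exists Hi, homeo_pair M H Hi /\ lipschitz M Z Hi.
Proof.
  intros Hc Hinj Hsurj HZ Hexp.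
  set (Hi := fun p => proj1_sig (constructive_indefinite_description _ (Hsurj p))).
  assert (HHi : forall p, H (Hi p) = p).
  { intros p. unfold Hi. destruct constructive_indefinite_description; auto. }
  assert (Hlip : lipschitz M Z Hi).
  { intros p q. pose proof (Hexp (Hi p) (Hi q)) as Hpq. rewrite !HHi in Hpq. exact Hpq. }
  exists Hi. repeat split; auto.
  intros p e He. exists (e / Z). split; [apply Rdiv_lt_0_compat; lra|].
  intros q Hq. eapply Rle_lt_trans; [apply Hlip|].
  apply (Rmult_lt_reg_r (/ Z)); [apply Rinv_0_lt_compat; lra|].
  replace (Z * Defs.dist M p q * / Z) with (Defs.dist M p q) by (field; lra).
  exact Hq.
Qed.

Lemma lipschitz_conj M (H Hi s : pt M -> pt M) L : (forall p, H (Hi p) = p) ->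
  (forall a b, Defs.dist M (H (s a)) (H (s b)) <= L * Defs.dist M (H a) (H b)) ->
  lipschitz M L (fun x => H (s (Hi x))).
Proof. intros HHi Hs x y. pose proof (Hs (Hi x) (Hi y)) as Hxy. rewrite !HHi in Hxy. exact Hxy. Qed.

(** * The conjugating homeomorphism of the circle *)

Section CircleConjugacy.
Variable Idx : Type.
Variable act : Idx -> PC -> PC.
Variable B : nat -> list Idx.
Variable i0 : Idx.
Variable eps : R.
Hypothesis act_ci : forall i, cont_inj Circle (act i).
Hypothesis B_nodup : forall n, NoDup (B n).
Hypothesis i0_ball0 : In i0 (B 0).
Hypothesis act_i0 : forall x, act i0 x = x.
Hypothesis eps_ge0 : 0 <= eps.
Hypothesis B_summable : ex_series (fun n => exp (- (eps * INR n)) * INR (length (B n))).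

(* mu a b is the measure of the ccw arc from a to b; mass is the total measure. *)
Definition mu (a b : PC) := wsum Idx B eps (fun i => ell (act i) a b).
Definition mass := wsum Idx B eps (fun _ => 1).

Lemma ell_unit a b i : 0 <= ell (act i) a b <= 1.
Proof. pose proof (ell_range (act i) a b); lra. Qed.

Lemma mu_nonneg a b : 0 <= mu a b.
Proof. apply wsum_nonneg; auto. intros; apply ell_unit. Qed.

Lemma mu_ge_ccw a b : ccw (v a) (v b) <= mu a b.
Proof.
  rewrite <- (ell_id (act i0) a b act_i0).
  apply (wsum_ge_ball0 Idx B eps B_summable (fun i => ell (act i) a b)); auto.
  intros; apply ell_unit.
Qed.

Lemma mass_ge1 : 1 <= mass.
Proof. apply (wsum_ge_ball0 Idx B eps B_summable (fun _ => 1) i0); auto; intros; lra. Qed.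

Lemma mu_diag a : mu a a = 0.
Proof.
  unfold mu. rewrite <- (wsum_zero Idx B eps). apply wsum_ext. intros; apply ell_diag.
Qed.

Lemma mu_swap a b : a <> b -> mu a b + mu b a = mass.
Proof.
  intros Hab. unfold mu, mass. rewrite <- wsum_plus by (auto; intros; apply ell_unit).
  apply wsum_ext. intros i. apply ell_swap; auto. apply act_ci.
Qed.

Lemma mu_add a b c : between a b c -> mu a b + mu b c = mu a c.
Proof.
  intros H. unfold mu. rewrite <- wsum_plus by (auto; intros; apply ell_unit).
  apply wsum_ext. intros i. apply ell_add; auto.
Qed.

Lemma mu_lt_mass a b : a <> b -> mu a b < mass.
Proof.
  intros H. rewrite <- (mu_swap a b H). pose proof (mu_ge_ccw b a).
  pose proof (ccw_pos b a (not_eq_sym H)). lra.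
Qed.

Lemma mu_div_range a b : 0 <= mu a b / mass < 1.
Proof.
  pose proof mass_ge1. pose proof (mu_nonneg a b).
  destruct (classic (a = b)) as [<-|Hab].
  - rewrite mu_diag. unfold Rdiv; rewrite Rmult_0_l; lra.
  - pose proof (mu_lt_mass a b Hab). split.
    + apply Rdiv_le_0_compat; lra.
    + apply (proj1 (Rdiv_lt_1 (mu a b) mass ltac:(lra))); auto.
Qed.

Definition Hval (x : PC) := mu p0 x / mass.

Definition Hc (x : PC) : PC := exist (fun t => 0 <= t < 1) (Hval x) (mu_div_range p0 x).

Lemma v_Hc x : v (Hc x) = Hval x.
Proof. reflexivity. Qed.

Lemma between_p0 a b : v a <= v b -> between p0 a b.
Proof. intros. pose proof (v_range a); pose proof (v_range b). unfold between; rewrite v_p0; ccw_cases. Qed.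

Lemma Hval_add a b : v a <= v b -> Hval b = Hval a + mu a b / mass.
Proof.
  intros H. pose proof mass_ge1. unfold Hval.
  rewrite <- (mu_add p0 a b) by (apply between_p0; auto). field; lra.
Qed.

Lemma ccw_of_sum X Y d : 0 <= X < 1 -> 0 <= Y < 1 -> 0 <= d < 1 ->
  Y = X + d \/ Y = X + d - 1 -> ccw X Y = d.
Proof. intros; ccw_cases. Qed.

Lemma ccw_Hc a b : ccw (v (Hc a)) (v (Hc b)) = mu a b / mass.
Proof.
  pose proof mass_ge1. rewrite !v_Hc.
  apply ccw_of_sum; try apply mu_div_range.
  destruct (Rle_lt_dec (v a) (v b)) as [Hl|Hl]; [left; apply Hval_add; auto|right].
  assert (Hab : a <> b) by (intros ->; lra).
  assert (E : mu a b / mass + mu b a / mass = 1)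
    by (rewrite <- Rdiv_plus_distr, mu_swap by auto; field; lra).
  rewrite (Hval_add b a) by lra. lra.
Qed.

Lemma dist_Hc a b : Defs.dist Circle (Hc a) (Hc b) = Rmin (mu a b) (mu b a) / mass.
Proof.
  rewrite dist_ccw, !ccw_Hc. pose proof mass_ge1. apply Rmin_div; lra.
Qed.

Lemma dist_le_mass_dist_Hc a b : Defs.dist Circle a b <= mass * Defs.dist Circle (Hc a) (Hc b).
Proof.
  rewrite dist_Hc, dist_ccw. pose proof mass_ge1.
  replace (mass * (Rmin (mu a b) (mu b a) / mass)) with (Rmin (mu a b) (mu b a)) by (field; lra).
  pose proof (mu_ge_ccw a b). pose proof (mu_ge_ccw b a).
  unfold Rmin; repeat destruct Rle_dec; lra.
Qed.

Lemma Hc_inj : Injective Hc.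
Proof.
  intros a b E. destruct (classic (a = b)) as [|Hab]; auto. exfalso.
  pose proof (ccw_Hc a b) as Hccw. rewrite E, ccw_diag in Hccw.
  pose proof (mu_ge_ccw a b). pose proof (ccw_pos a b Hab). pose proof mass_ge1.
  assert (mu a b = 0) by (apply (Rmult_eq_reg_r (/ mass)); [lra | ]; apply Rinv_neq_0_compat; lra).
  lra.
Qed.

(* act (r i) = act i ∘ s measures the arc from a to b as act i measures the arc from s a to
   s b, or from s b to s a when s reverses orientation. *)
Lemma mu_shift_le (s : PC -> PC) (r : Idx -> Idx) : cont_inj Circle s ->
  shifts_balls Idx B r -> (forall i x, act (r i) x = act i (s x)) ->
  forall a b, Rmin (mu (s a) (s b)) (mu (s b) (s a)) <= exp eps * Rmin (mu a b) (mu b a).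
Proof.
  intros Hs Hr Hact a b.
  assert (Er : forall i, act (r i) = fun x => act i (s x))
    by (intros; apply functional_extensionality; auto).
  assert (Shift : forall a0 b0, wsum Idx B eps (fun i => ell (act (r i)) a0 b0) <= exp eps * mu a0 b0)
    by (intros; apply (wsum_shift Idx B eps B_summable (fun i => ell (act i) a0 b0)); auto;
        intros; apply ell_unit).
  assert (Hmin : forall p q p' q', p <= exp eps * p' -> q <= exp eps * q' ->
                 Rmin p q <= exp eps * Rmin p' q').
  { intros. pose proof (exp_pos eps). unfold Rmin; repeat destruct Rle_dec; nra. }
  destruct (orientation_dichotomy s Hs) as [P|Rv]; [|rewrite (Rmin_comm (mu a b))];
    apply Hmin; (eapply Rle_trans; [|apply Shift]); right; unfold mu; apply wsum_ext;
    intros i; rewrite Er; symmetry;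
    [ apply ell_comp_pres | apply ell_comp_pres | apply ell_comp_rev | apply ell_comp_rev ]; auto.
Qed.

Lemma Hc_shift_lip (s : PC -> PC) (r : Idx -> Idx) : cont_inj Circle s ->
  shifts_balls Idx B r -> (forall i x, act (r i) x = act i (s x)) ->
  forall a b, Defs.dist Circle (Hc (s a)) (Hc (s b)) <= exp eps * Defs.dist Circle (Hc a) (Hc b).
Proof.
  intros Hs Hr Hact a b. rewrite !dist_Hc. pose proof mass_ge1.
  unfold Rdiv. rewrite <- Rmult_assoc.
  apply Rmult_le_compat_r; [left; apply Rinv_0_lt_compat; lra|].
  apply (mu_shift_le s r); auto.
Qed.

Lemma mu_small_fwd x : forall eta, 0 < eta -> exists delta, 0 < delta /\
  forall y, ccw (v x) (v y) < delta -> mu x y < eta.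
Proof.
  apply (wsum_small Idx B eps eps_ge0 B_summable PC (fun y i => ell (act i) x y)).
  - intros; apply ell_unit.
  - intros i; apply ell_small_fwd; auto.
Qed.

Lemma mu_small_bwd x : forall eta, 0 < eta -> exists delta, 0 < delta /\
  forall y, ccw (v y) (v x) < delta -> mu y x < eta.
Proof.
  apply (wsum_small Idx B eps eps_ge0 B_summable PC (fun y i => ell (act i) y x)).
  - intros; apply ell_unit.
  - intros i; apply ell_small_bwd; auto.
Qed.

Lemma Hc_cont : mcontinuous Circle Hc.
Proof.
  intros x eta Heta. pose proof mass_ge1.
  destruct (mu_small_fwd x (eta * mass)) as [d1 [Hd1 H1]]; [nra|].
  destruct (mu_small_bwd x (eta * mass)) as [d2 [Hd2 H2]]; [nra|].
  exists (Rmin d1 d2); split; [apply Rmin_glb_lt; auto|].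
  intros y Hy. rewrite dist_Hc. rewrite dist_ccw in Hy.
  apply Rlt_div_l; [lra|].
  assert (Hor : ccw (v x) (v y) < d1 \/ ccw (v y) (v x) < d2)
    by (unfold Rmin in Hy; repeat destruct Rle_dec; lra).
  destruct Hor as [Hf|Hb].
  - eapply Rle_lt_trans; [apply Rmin_l|auto].
  - eapply Rle_lt_trans; [apply Rmin_r|auto].
Qed.

Lemma Hval_p0 : Hval p0 = 0.
Proof. unfold Hval. rewrite mu_diag. unfold Rdiv; ring. Qed.

Lemma Hval_emb_cont tau : 0 <= tau < 1 -> forall eta, 0 < eta -> exists delta, 0 < delta /\
  forall y, 0 <= y < 1 -> Rabs (y - tau) < delta -> Rabs (Hval (emb y) - Hval (emb tau)) < eta.
Proof.
  intros Ht eta Heta. pose proof mass_ge1. set (x := emb tau).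
  destruct (mu_small_fwd x (eta * mass)) as [d1 [Hd1 H1]]; [nra|].
  destruct (mu_small_bwd x (eta * mass)) as [d2 [Hd2 H2]]; [nra|].
  exists (Rmin d1 d2); split; [apply Rmin_glb_lt; auto|].
  intros y Hy Hyt.
  assert (Vx : v x = tau) by (apply v_emb; auto).
  assert (Vy : v (emb y) = y) by (apply v_emb; auto).
  assert (Hyt1 := Rlt_le_trans _ _ _ Hyt (Rmin_l _ _)).
  assert (Hyt2 := Rlt_le_trans _ _ _ Hyt (Rmin_r _ _)).
  pose proof (mu_div_range x (emb y)); pose proof (mu_div_range (emb y) x).
  destruct (Rle_lt_dec tau y).
  - rewrite (Hval_add x (emb y)) by lra.
    replace (Hval x + mu x (emb y) / mass - Hval x) with (mu x (emb y) / mass) by ring.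
    rewrite Rabs_pos_eq by lra. apply Rlt_div_l; [lra|].
    apply H1. rewrite Vx, Vy. unfold Rabs in *; destruct Rcase_abs; ccw_cases.
  - rewrite (Hval_add (emb y) x) by lra.
    replace (Hval (emb y) - (Hval (emb y) + mu (emb y) x / mass)) with (- (mu (emb y) x / mass))
      by ring.
    rewrite Rabs_Ropp, Rabs_pos_eq by lra. apply Rlt_div_l; [lra|].
    apply H2. rewrite Vx, Vy. unfold Rabs in *; destruct Rcase_abs; ccw_cases.
Qed.

Lemma Hval_near_1 t : t < 1 -> exists b, 0 <= b < 1 /\ t < Hval (emb b).
Proof.
  intros Ht. pose proof mass_ge1.
  destruct (mu_small_bwd p0 ((1 - t) * mass)) as [d [Hd Hsmall]]; [nra|].
  set (b := Rmax (1/2) (1 - d/2)).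
  assert (Hb : 1/2 <= b < 1) by (unfold b, Rmax; destruct Rle_dec; lra).
  exists b; split; [lra|].
  assert (Hyb : mu (emb b) p0 < (1 - t) * mass).
  { apply Hsmall. rewrite v_emb, v_p0 by lra. unfold b, Rmax; destruct Rle_dec; ccw_cases. }
  assert (Hne : emb b <> p0).
  { intros E. apply (f_equal v) in E. rewrite v_emb, v_p0 in E; lra. }
  pose proof (mu_swap (emb b) p0 Hne).
  unfold Hval. apply Rlt_div_r; [lra|]. nra.
Qed.

Lemma Hc_surj p : exists x, Hc x = p.
Proof.
  set (t := v p). assert (Ht := v_range p). fold t in Ht.
  destruct (Hval_near_1 t ltac:(lra)) as [b [Hb Htb]].
  set (phi := fun tau => Hval (emb (clamp 0 b tau)) - t).
  destruct (IVT_on phi 0 b ltac:(lra)) as [z [Hz Ez]].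
  - intros tau Htau. apply continuity_pt_intro. intros eta Heta.
    assert (Hc0 := clamp_in 0 b tau ltac:(lra)).
    destruct (Hval_emb_cont (clamp 0 b tau) ltac:(lra) eta Heta) as [d [Hd Hcont]].
    exists d; split; auto. intros y Hy. unfold phi.
    replace (Hval (emb (clamp 0 b y)) - t - (Hval (emb (clamp 0 b tau)) - t))
      with (Hval (emb (clamp 0 b y)) - Hval (emb (clamp 0 b tau))) by ring.
    apply Hcont; [pose proof (clamp_in 0 b y ltac:(lra)); lra|].
    eapply Rle_lt_trans; [apply clamp_lip|]; auto.
  - unfold phi. rewrite !clamp_id by lra. rewrite emb0, Hval_p0.
    assert (0 <= t) by lra. nra.
  - exists (emb z). apply v_inj. rewrite v_Hc. unfold phi in Ez. rewrite clamp_id in Ez by lra.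
    fold t; lra.
Qed.

Theorem circle_conjugacy : exists H Hi Z, homeo_pair Circle H Hi /\ 0 < Z /\ lipschitz Circle Z Hi /\
  forall s r, cont_inj Circle s -> shifts_balls Idx B r -> (forall i x, act (r i) x = act i (s x)) ->
    lipschitz Circle (exp eps) (fun x => H (s (Hi x))).
Proof.
  pose proof mass_ge1.
  destruct (homeo_of_inverse_lipschitz Circle Hc mass Hc_cont Hc_inj Hc_surj ltac:(lra)
              dist_le_mass_dist_Hc) as [Hi [HHi Hlip]].
  exists Hc, Hi, mass. split; [exact HHi|split; [lra|split; [exact Hlip|]]].
  intros s r Hs Hr Hact. apply lipschitz_conj; [apply HHi|]. apply (Hc_shift_lip s r); auto.
Qed.

End CircleConjugacy.

(** * The conjugating homeomorphism of the interval *)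

Definition PIt := pt Interval01.
Definition vI (p : PIt) : R := proj1_sig p.

Lemma vI_range (p : PIt) : 0 <= vI p <= 1.
Proof. exact (proj2_sig p). Qed.

Lemma vI_inj (p q : PIt) : vI p = vI q -> p = q.
Proof.
  destruct p as [x hx], q as [y hy]; unfold vI; simpl; intros ->.
  f_equal; apply proof_irrelevance.
Qed.

Lemma distI (p q : PIt) : Defs.dist Interval01 p q = Rabs (vI p - vI q).
Proof. reflexivity. Qed.

Definition clampI (t : R) : PIt :=
  exist (fun x => 0 <= x <= 1) (clamp 0 1 t) (clamp_in 0 1 t ltac:(lra)).

Definition q0 : PIt := clampI 0.
Definition q1 : PIt := clampI 1.

Lemma vI_clampI t : vI (clampI t) = clamp 0 1 t.
Proof. reflexivity. Qed.

Lemma vI_q0 : vI q0 = 0.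
Proof. apply clamp_id; lra. Qed.

Lemma vI_q1 : vI q1 = 1.
Proof. apply clamp_id; lra. Qed.

Lemma clampI_vI p : clampI (vI p) = p.
Proof. apply vI_inj. rewrite vI_clampI. apply clamp_id, vI_range. Qed.

Lemma cont_inj_interval_monotone g : cont_inj Interval01 g ->
  (forall x y, vI x < vI y -> vI (g x) < vI (g y)) \/
  (forall x y, vI x < vI y -> vI (g y) < vI (g x)).
Proof.
  intros [gc gi]. set (gr := fun t => vI (g (clampI t))).
  assert (Hc : forall t, continuity_pt gr t).
  { intros t. apply continuity_pt_intro. intros e He. destruct (gc (clampI t) e He) as [d [Hd H]].
    exists d; split; auto. intros y Hy. unfold gr.
    specialize (H (clampI y)). rewrite !distI, !vI_clampI in H. rewrite Rabs_minus_sym. apply H.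
    rewrite Rabs_minus_sym. eapply Rle_lt_trans; [apply clamp_lip|]; auto. }
  assert (Hi : forall x y, 0 <= x <= 1 -> 0 <= y <= 1 -> gr x = gr y -> x = y).
  { intros x y Hx Hy E. apply vI_inj, gi, (f_equal vI) in E.
    rewrite !vI_clampI, !clamp_id in E; auto. }
  destruct (cont_inj_monotone gr 0 1 ltac:(lra) (fun t _ => Hc t) Hi) as [M|M];
    [left|right]; intros x y Hxy; pose proof (M _ _ (vI_range x) (vI_range y) Hxy) as Mxy;
    unfold gr in Mxy; rewrite !clampI_vI in Mxy; auto.
Qed.

Lemma cont_inj_interval_add g a b c : cont_inj Interval01 g -> vI a <= vI b <= vI c ->
  Rabs (vI (g a) - vI (g b)) + Rabs (vI (g b) - vI (g c)) = Rabs (vI (g a) - vI (g c)).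
Proof.
  intros Hg [[Hab|Hab] [Hbc|Hbc]];
    try (apply vI_inj in Hab; subst); try (apply vI_inj in Hbc; subst);
    try (rewrite Rminus_diag, Rabs_R0; lra);
    destruct (cont_inj_interval_monotone g Hg) as [M|M];
    pose proof (M _ _ Hab); pose proof (M _ _ Hbc);
    unfold Rabs; repeat destruct Rcase_abs; lra.
Qed.

Section IntervalConjugacy.
Variable Idx : Type.
Variable act : Idx -> PIt -> PIt.
Variable B : nat -> list Idx.
Variable i0 : Idx.
Variable eps : R.
Hypothesis act_ci : forall i, cont_inj Interval01 (act i).
Hypothesis B_nodup : forall n, NoDup (B n).
Hypothesis i0_ball0 : In i0 (B 0).
Hypothesis act_i0 : forall x, act i0 x = x.
Hypothesis eps_ge0 : 0 <= eps.
Hypothesis B_summable : ex_series (fun n => exp (- (eps * INR n)) * INR (length (B n))).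

Definition lenI (a b : PIt) (i : Idx) := Rabs (vI (act i a) - vI (act i b)).
Definition muI (a b : PIt) := wsum Idx B eps (lenI a b).

Lemma lenI_unit a b i : 0 <= lenI a b i <= 1.
Proof.
  unfold lenI. pose proof (vI_range (act i a)); pose proof (vI_range (act i b)).
  unfold Rabs; destruct Rcase_abs; lra.
Qed.

Lemma muI_nonneg a b : 0 <= muI a b.
Proof. apply wsum_nonneg; auto. apply lenI_unit. Qed.

Lemma muI_ge_dist a b : Rabs (vI a - vI b) <= muI a b.
Proof.
  replace (Rabs (vI a - vI b)) with (lenI a b i0) by (unfold lenI; rewrite !act_i0; auto).
  apply wsum_ge_ball0; auto. apply lenI_unit.
Qed.

Lemma muI_sym a b : muI a b = muI b a.
Proof. apply wsum_ext. intros i; apply Rabs_minus_sym. Qed.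

Lemma muI_add a b c : vI a <= vI b <= vI c -> muI a b + muI b c = muI a c.
Proof.
  intros H. unfold muI. rewrite <- wsum_plus by (auto; apply lenI_unit).
  apply wsum_ext. intros i. apply cont_inj_interval_add; auto.
Qed.

Lemma muI_diag a : muI a a = 0.
Proof. pose proof (muI_add a a a ltac:(lra)). lra. Qed.

Definition massI := muI q0 q1.

Lemma massI_ge1 : 1 <= massI.
Proof.
  pose proof (muI_ge_dist q0 q1). rewrite vI_q0, vI_q1 in H.
  replace (Rabs (0 - 1)) with 1 in H by (rewrite Rabs_minus_sym, Rminus_0_r, Rabs_R1; auto).
  auto.
Qed.

Definition HvalI x := muI q0 x / massI.

Lemma HvalI_range x : 0 <= HvalI x <= 1.
Proof.
  pose proof massI_ge1. pose proof (muI_nonneg q0 x). pose proof (muI_nonneg x q1).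
  pose proof (vI_range x).
  assert (muI q0 x + muI x q1 = massI) by (apply muI_add; rewrite vI_q0, vI_q1; lra).
  unfold HvalI. split; [apply Rdiv_le_0_compat; lra|].
  apply (proj1 (Rdiv_le_1 (muI q0 x) massI ltac:(lra))). lra.
Qed.

Definition HcI (x : PIt) : PIt := exist (fun t => 0 <= t <= 1) (HvalI x) (HvalI_range x).

Lemma dist_HcI a b : Defs.dist Interval01 (HcI a) (HcI b) = muI a b / massI.
Proof.
  rewrite distI. change (Rabs (HvalI a - HvalI b) = muI a b / massI). unfold HvalI.
  pose proof massI_ge1.
  assert (0 <= muI a b / massI) by (apply Rdiv_le_0_compat; [apply muI_nonneg|lra]).
  destruct (Rle_dec (vI a) (vI b)).
  - assert (E : muI q0 a + muI a b = muI q0 b)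
      by (apply muI_add; pose proof (vI_range a); rewrite vI_q0; lra).
    rewrite <- E, Rabs_minus_sym, Rabs_pos_eq; [field; lra|].
    replace ((muI q0 a + muI a b) / massI - muI q0 a / massI) with (muI a b / massI)
      by (field; lra); auto.
  - assert (E : muI q0 b + muI b a = muI q0 a)
      by (apply muI_add; pose proof (vI_range b); rewrite vI_q0; lra).
    rewrite <- E, (muI_sym b a), Rabs_pos_eq; [field; lra|].
    replace ((muI q0 b + muI a b) / massI - muI q0 b / massI) with (muI a b / massI)
      by (field; lra); auto.
Qed.

Lemma dist_le_mass_dist_HcI a b :
  Defs.dist Interval01 a b <= massI * Defs.dist Interval01 (HcI a) (HcI b).
Proof.
  rewrite dist_HcI, distI. pose proof massI_ge1. pose proof (muI_ge_dist a b).
  replace (massI * (muI a b / massI)) with (muI a b) by (field; lra). auto.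
Qed.

Lemma HcI_inj : Injective HcI.
Proof.
  intros a b E. pose proof (dist_le_mass_dist_HcI a b) as Hd.
  rewrite E, (distI (HcI b)), Rminus_diag, Rabs_R0, Rmult_0_r, distI in Hd.
  apply vI_inj. pose proof (Rabs_pos (vI a - vI b)).
  assert (Rabs (vI a - vI b) = 0) by lra. unfold Rabs in *; destruct Rcase_abs; lra.
Qed.

Lemma HcI_shift_lip (s : PIt -> PIt) (r : Idx -> Idx) :
  shifts_balls Idx B r -> (forall i x, act (r i) x = act i (s x)) ->
  forall a b, Defs.dist Interval01 (HcI (s a)) (HcI (s b))
              <= exp eps * Defs.dist Interval01 (HcI a) (HcI b).
Proof.
  intros Hr Hact a b. rewrite !dist_HcI. pose proof massI_ge1.
  assert (Shift : muI (s a) (s b) <= exp eps * muI a b).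
  { unfold muI. rewrite (wsum_ext Idx B eps (lenI (s a) (s b)) (fun i => lenI a b (r i))).
    - apply wsum_shift; auto. apply lenI_unit.
    - intros i; unfold lenI; rewrite !Hact; auto. }
  unfold Rdiv. rewrite <- Rmult_assoc.
  apply Rmult_le_compat_r; [left; apply Rinv_0_lt_compat; lra|auto].
Qed.

Lemma HcI_cont : mcontinuous Interval01 HcI.
Proof.
  intros x eta Heta. pose proof massI_ge1.
  destruct (wsum_small Idx B eps eps_ge0 B_summable PIt (fun y => lenI x y)
              (fun y => Rabs (vI x - vI y)) (fun y => lenI_unit x y))
    with (eta := eta * massI) as [d [Hd Hsmall]]; [|nra|].
  - intros i e He. destruct (proj1 (act_ci i) x e He) as [d' [Hd' Hcont]].
    exists d'; split; [auto|intros y Hy; apply (Hcont y); auto].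
  - exists d; split; auto. intros y Hy. rewrite dist_HcI. apply Rlt_div_l; [lra|].
    apply Hsmall, Hy.
Qed.

Lemma HcI_surj p : exists x, HcI x = p.
Proof.
  pose proof massI_ge1. set (t := vI p). assert (Ht := vI_range p). fold t in Ht.
  set (phi := fun tau => HvalI (clampI tau) - t).
  destruct (IVT_on phi 0 1 ltac:(lra)) as [z [Hz Ez]].
  - intros tau _. apply continuity_pt_intro. intros eta Heta.
    destruct (HcI_cont (clampI tau) eta Heta) as [d [Hd Hcont]].
    exists d; split; auto. intros y Hy. unfold phi.
    replace (HvalI (clampI y) - t - (HvalI (clampI tau) - t))
      with (HvalI (clampI y) - HvalI (clampI tau)) by ring.
    specialize (Hcont (clampI y)). rewrite !distI in Hcont. simpl vI in Hcont.
    rewrite Rabs_minus_sym. apply Hcont. rewrite Rabs_minus_sym.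
    eapply Rle_lt_trans; [apply clamp_lip|]; auto.
  - unfold phi. fold q0 q1. unfold HvalI. rewrite muI_diag. fold massI.
    replace (massI / massI) with 1 by (field; lra).
    unfold Rdiv; rewrite Rmult_0_l. nra.
  - exists (clampI z). apply vI_inj. unfold phi in Ez. change (HvalI (clampI z) = t). lra.
Qed.

Theorem interval_conjugacy : exists H Hi Z,
  homeo_pair Interval01 H Hi /\ 0 < Z /\ lipschitz Interval01 Z Hi /\
  forall s r, cont_inj Interval01 s -> shifts_balls Idx B r ->
    (forall i x, act (r i) x = act i (s x)) ->
    lipschitz Interval01 (exp eps) (fun x => H (s (Hi x))).
Proof.
  pose proof massI_ge1.
  destruct (homeo_of_inverse_lipschitz Interval01 HcI massI HcI_cont HcI_inj HcI_surj ltac:(lra)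
              dist_le_mass_dist_HcI) as [Hi [HHi Hlip]].
  exists HcI, Hi, massI. split; [exact HHi|split; [lra|split; [exact Hlip|]]].
  intros s r _ Hr Hact. apply lipschitz_conj; [apply HHi|]. apply (HcI_shift_lip s r); auto.
Qed.

End IntervalConjugacy.

Theorem summable_balls_conjugacy (M : cc1) (Idx : Type) (act : Idx -> pt M -> pt M)
  (B : nat -> list Idx) (i0 : Idx) (eps : R) :
  (forall i, cont_inj M (act i)) -> (forall n, NoDup (B n)) -> In i0 (B 0%nat) ->
  (forall x, act i0 x = x) -> 0 <= eps ->
  ex_series (fun n => exp (- (eps * INR n)) * INR (length (B n))) ->
  exists H Hi Z, homeo_pair M H Hi /\ 0 < Z /\ lipschitz M Z Hi /\
    forall s r, cont_inj M s -> shifts_balls Idx B r -> (forall i x, act (r i) x = act i (s x)) ->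
      lipschitz M (exp eps) (fun x => H (s (Hi x))).
Proof.
  destruct M; intros.
  - apply (interval_conjugacy Idx act B i0 eps); auto.
  - apply (circle_conjugacy Idx act B i0 eps); auto.
Qed.

Lemma exp_mult_INR x m : exp (x * INR m) = exp x ^ m.
Proof.
  induction m; simpl pow.
  - simpl; rewrite Rmult_0_r, exp_0; auto.
  - rewrite S_INR, Rmult_plus_distr_l, Rmult_1_r, exp_plus, IHm. ring.
Qed.

Lemma exp_neg_range eps : 0 < eps -> 0 <= exp (- eps) < 1.
Proof. intros. split; [left; apply exp_pos|]. rewrite <- exp_0. apply exp_increasing. lra. Qed.

Lemma exp_ge_1_plus x : 0 <= x -> 1 + x <= exp x.
Proof.
  intros Hx. destruct (Req_dec x 0) as [->|Hne]; [rewrite exp_0; lra|].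
  left; apply exp_ineq1; lra.
Qed.

Lemma subexp_summable (c : nat -> nat) eps : 0 < eps -> (forall n, (1 <= c n)%nat) ->
  Un_cv (fun n => ln (INR (c n)) / INR n) 0 ->
  ex_series (fun n => exp (- (eps * INR n)) * INR (c n)).
Proof.
  intros He Hc Hu. destruct (Hu (eps / 2) ltac:(lra)) as [N HN].
  apply (ex_series_geom_bound _ 1 (exp (- (eps / 2))) (S N)); [lra|apply exp_neg_range; lra| |].
  - intros n; apply Rmult_le_pos; [left; apply exp_pos|apply pos_INR].
  - intros n Hn. specialize (HN n ltac:(lia)). unfold R_dist in HN. rewrite Rminus_0_r in HN.
    assert (Hn0 : 0 < INR n) by (apply lt_0_INR; lia).
    assert (Hc0 : 0 < INR (c n)) by (apply lt_0_INR; specialize (Hc n); lia).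
    assert (Hl : ln (INR (c n)) < eps / 2 * INR n).
    { apply Rabs_def2 in HN. destruct HN as [HN _]. apply (Rlt_div_l _ _ _ Hn0) in HN. lra. }
    rewrite <- exp_mult_INR, Rmult_1_l.
    rewrite <- (exp_ln (INR (c n))) at 1 by auto. rewrite <- exp_plus.
    left. apply exp_increasing. lra.
Qed.

Lemma linear_summable eps : 0 < eps -> ex_series (fun n => exp (- (eps * INR n)) * INR (S n)).
Proof.
  intros He.
  assert (Hk : 0 < 2 / eps) by (apply Rdiv_lt_0_compat; lra).
  apply (ex_series_geom_bound _ (1 + 2 / eps) (exp (- (eps / 2))) 0);
    [lra|apply exp_neg_range; lra| |].
  - intros n; apply Rmult_le_pos; [left; apply exp_pos|apply pos_INR].
  - intros n _. rewrite <- exp_mult_INR.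
    assert (E : exp (- (eps / 2) * INR n) = exp (- (eps * INR n)) * exp (eps / 2 * INR n))
      by (rewrite <- exp_plus; f_equal; field).
    pose proof (pos_INR n). pose proof (exp_pos (- (eps * INR n))).
    pose proof (exp_ge_1_plus (eps / 2 * INR n) ltac:(nra)).
    assert (INR (S n) <= (1 + 2 / eps) * exp (eps / 2 * INR n)).
    { rewrite S_INR.
      assert ((1 + 2 / eps) * (1 + eps / 2 * INR n) = 1 + INR n + 2 / eps + eps / 2 * INR n)
        by (field; lra).
      nra. }
    rewrite E. nra.
Qed.

Section GroupBalls.
Variable G : Group.
Variable gens : list G.

Lemma word_eval_app w s : word_eval G (w ++ [s]) = gmul G (word_eval G w) s.
Proof.
  induction w as [|a w IH]; simpl.
  - rewrite gmul1r, gmul1l; auto.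
  - rewrite IH, gmulA; auto.
Qed.

Lemma in_ball_mul n g s : In s gens -> in_ball G gens n g -> in_ball G gens (S n) (gmul G g s).
Proof.
  intros Hs [w [Hw [Hl He]]]. exists (w ++ [s]). split; [|split].
  - intros x Hx. apply in_app_or in Hx. destruct Hx as [?|[<-|[]]]; auto.
  - rewrite length_app; simpl; lia.
  - rewrite word_eval_app, He; auto.
Qed.

Lemma in_ball_one n : in_ball G gens n (gone G).
Proof. exists []. split; [intros ? []|split; [simpl; lia|reflexivity]]. Qed.

Lemma gmul_inj_r s : Injective (fun g => gmul G g s).
Proof.
  intros g h E. apply (f_equal (fun x => gmul G x (ginv G s))) in E.
  rewrite <- !gmulA, gmulVr, !gmul1r in E; auto.
Qed.

Lemma subexp_balls : subexp_growth G gens -> exists B : nat -> list G,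
  (forall n, NoDup (B n)) /\ (forall n g, In g (B n) <-> in_ball G gens n g) /\
  forall eps, 0 < eps -> ex_series (fun n => exp (- (eps * INR n)) * INR (length (B n))).
Proof.
  intros [c [Hc Hu]].
  set (B := fun n => proj1_sig (constructive_indefinite_description _ (Hc n))).
  assert (HB : forall n, NoDup (B n) /\ (forall g, In g (B n) <-> in_ball G gens n g) /\
                         length (B n) = c n).
  { intros n. unfold B. destruct constructive_indefinite_description; auto. }
  exists B. split; [apply HB|split; [apply HB|]].
  intros eps Heps. apply (ex_series_ext (fun n => exp (- (eps * INR n)) * INR (c n))).
  - intros n. destruct (HB n) as [_ [_ ->]]. auto.
  - apply subexp_summable; auto. intros n. destruct (HB n) as [_ [Hin <-]].
    assert (Hone : In (gone G) (B n)) by (apply Hin, in_ball_one).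
    destruct (B n); simpl in *; [contradiction|lia].
Qed.

End GroupBalls.

Theorem action_conjugate_lipschitz (M : cc1) (G : Group) (act : G -> pt M -> pt M) (gens : list G) :
  is_homeo_action G M act -> subexp_growth G gens -> forall eps, 0 < eps ->
  exists h hi, homeo_pair M h hi /\
    forall s, In s gens -> lipschitz M (exp eps) (fun x => h (act s (hi x))).
Proof.
  intros [Ha1 [Ha2 Ha3]] Hgrowth eps Heps.
  destruct (subexp_balls G gens Hgrowth) as [B [Bnd [HB Bsum]]].
  assert (Hci : forall g, cont_inj M (act g)) by (intros; apply is_homeo_cont_inj, Ha3).
  destruct (summable_balls_conjugacy M G act B (gone G) eps Hci Bnd)
    as [h [hi [Z [Hp [_ [_ Hlip]]]]]]; [apply HB, in_ball_one | auto | lra | auto |].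
  exists h, hi. split; auto. intros s Hs.
  apply (Hlip (act s) (fun g => gmul G g s)); auto.
  split; [|apply gmul_inj_r].
  intros n g Hg. apply HB, in_ball_mul, HB; auto.
Qed.

Lemma iter_cont_inj M (f : pt M -> pt M) k : cont_inj M f -> cont_inj M (Nat.iter k f).
Proof.
  intros Hf. induction k; simpl.
  - split; [apply mcontinuous_id|intros x y; auto].
  - apply (cont_inj_comp M f (Nat.iter k f)); auto.
Qed.

Lemma iter_succ_r {A} (f : A -> A) k x : Nat.iter k f (f x) = Nat.iter (S k) f x.
Proof. induction k; simpl; auto. rewrite IHk; auto. Qed.

Lemma circle_homeo_conjugacy (f : PC -> PC) eps : is_homeo Circle f -> 0 < eps ->
  exists H Hi Z, homeo_pair Circle H Hi /\ 0 < Z /\ lipschitz Circle Z Hi /\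
    lipschitz Circle (exp eps) (fun x => H (f (Hi x))).
Proof.
  intros Hf He. assert (Hfc := is_homeo_cont_inj Circle f Hf).
  destruct (summable_balls_conjugacy Circle nat (fun k => Nat.iter k f) (fun n => seq 0 (S n)) 0%nat
              eps (fun k => iter_cont_inj Circle f k Hfc) (fun n => seq_NoDup _ _))
    as [H [Hi [Z [Hp [HZ [HZlip Hlip]]]]]]; [simpl; auto|reflexivity|lra| |].
  - apply (ex_series_ext (fun n => exp (- (eps * INR n)) * INR (S n))); [|apply linear_summable; auto].
    intros n. rewrite length_seq. auto.
  - exists H, Hi, Z. split; [exact Hp|split; [exact HZ|split; [exact HZlip|]]].
    apply (Hlip f S Hfc); [split|].
    + intros n i Hi'. apply in_seq in Hi'. apply in_seq. lia.
    + intros i j E. injection E; auto.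
    + intros i x. apply eq_sym, iter_succ_r.
Qed.

Lemma is_homeo_conj M (f h hi : pt M -> pt M) :
  homeo_pair M h hi -> is_homeo M f -> is_homeo M (fun x => h (f (hi x))).
Proof.
  intros [P1 [P2 [P3 P4]]] [fi [F1 [F2 [F3 F4]]]].
  exists (fun x => h (fi (hi x))). repeat split.
  - intros x. rewrite P1, F1, P2; auto.
  - intros x. rewrite P1, F2, P2; auto.
  - apply mcontinuous_comp; [|apply mcontinuous_comp]; auto.
  - apply mcontinuous_comp; [|apply mcontinuous_comp]; auto.
Qed.

Theorem circle_homeo_conjugate_lipschitz (f : PC -> PC) : is_homeo Circle f ->
  forall eps, 0 < eps -> exists h hi, homeo_pair Circle h hi /\
    is_homeo Circle (fun x => h (f (hi x))) /\ lipschitz Circle (exp eps) (fun x => h (f (hi x))).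
Proof.
  intros Hf eps He.
  destruct (circle_homeo_conjugacy f eps Hf He) as [h [hi [Z [Hp [_ [_ Hlip]]]]]].
  exists h, hi. split; [exact Hp|split; [apply is_homeo_conj; auto|exact Hlip]].
Qed.

(** * Topological entropy *)

Lemma lipschitz_iter M L (g : pt M -> pt M) k : 0 <= L -> lipschitz M L g ->
  lipschitz M (L ^ k) (Nat.iter k g).
Proof.
  intros HL Hg. induction k; intros x y; simpl; [lra|].
  eapply Rle_trans; [apply Hg|]. rewrite Rmult_assoc. apply Rmult_le_compat_l; auto.
Qed.

Lemma iter_conj {A} (f h hi : A -> A) k x : (forall y, hi (h y) = y) ->
  Nat.iter k (fun y => h (f (hi y))) (h x) = h (Nat.iter k f x).
Proof. intros Hhi. induction k; simpl; auto. rewrite IHk, Hhi; auto. Qed.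

(* Cut [0, 1) into ⌊1/ρ⌋ + 1 intervals of length ρ; a ρ-separated set meets each at most once. *)
Lemma separated_card_le (m : list PC) rho : 0 < rho -> NoDup m ->
  (forall x y, In x m -> In y m -> x <> y -> rho < Defs.dist Circle x y) ->
  INR (length m) <= 1 / rho + 1.
Proof.
  intros Hr Hnd Hsep.
  set (bz := fun x : PC => Int_part (v x / rho)).
  set (K := Int_part (1 / rho)).
  assert (Hdiv : forall t, 0 <= t <= 1 -> 0 <= t / rho <= 1 / rho)
    by (intros t Ht; split; [apply Rdiv_le_0_compat|apply Rmult_le_compat_r;
        [left; apply Rinv_0_lt_compat|]]; lra).
  assert (Hb0 : forall x, (0 <= bz x <= K)%Z).
  { intros x. pose proof (v_range x) as Hx.
    pose proof (base_Int_part (v x / rho)). pose proof (base_Int_part (1 / rho)).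
    destruct (Hdiv (v x) ltac:(lra)). unfold bz, K. split.
    - apply Z.lt_pred_le, lt_IZR. rewrite <- Z.sub_1_r, minus_IZR. simpl. lra.
    - apply Z.lt_succ_r, lt_IZR. rewrite succ_IZR. lra. }
  set (b := fun x => Z.to_nat (bz x)).
  assert (Hbinj : forall x y, In x m -> In y m -> b x = b y -> x = y).
  { intros x y Hx Hy E. destruct (classic (x = y)) as [?|Hne]; auto. exfalso.
    specialize (Hsep x y Hx Hy Hne).
    assert (Ez : bz x = bz y) by (apply Z2Nat.inj; apply Hb0 || auto).
    pose proof (base_Int_part (v x / rho)). pose proof (base_Int_part (v y / rho)).
    unfold bz in Ez. rewrite Ez in *.
    assert (Rabs (v x - v y) < rho).
    { replace (v x - v y) with (rho * (v x / rho - v y / rho)) by (field; lra).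
      rewrite Rabs_mult, Rabs_pos_eq by lra.
      assert (Rabs (v x / rho - v y / rho) < 1) by (unfold Rabs; destruct Rcase_abs; lra).
      nra. }
    rewrite dist_ccw in Hsep. pose proof (v_range x); pose proof (v_range y).
    unfold Rmin, Rabs in *; repeat destruct Rle_dec; repeat destruct Rcase_abs; ccw_cases. }
  assert (Hl : (length (map b m) <= length (seq 0 (S (Z.to_nat K))))%nat).
  { apply NoDup_incl_length.
    - apply NoDup_map_NoDup_ForallPairs; [intros x y Hx Hy; apply Hbinj | ]; auto.
    - intros z Hz. apply in_map_iff in Hz. destruct Hz as [x [<- Hx]]. apply in_seq.
      unfold b. specialize (Hb0 x). lia. }
  rewrite length_map, length_seq in Hl. apply le_INR in Hl.
  rewrite S_INR, (INR_IZR_INZ (Z.to_nat K)), Z2Nat.id in Hl by (pose proof (Hb0 p0); lia).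
  pose proof (base_Int_part (1 / rho)). unfold K in Hl. lra.
Qed.

Lemma conj_iter_expansion M (f h hi : pt M -> pt M) Z L k x y :
  (forall p, hi (h p) = p) -> 0 <= Z -> lipschitz M Z hi -> 0 <= L ->
  lipschitz M L (fun p => h (f (hi p))) ->
  Defs.dist M (Nat.iter k f x) (Nat.iter k f y) <= Z * (L ^ k * Defs.dist M (h x) (h y)).
Proof.
  intros Hhi HZ0 HZ HL Hlip.
  rewrite <- (Hhi (Nat.iter k f x)), <- (Hhi (Nat.iter k f y)), <- !(iter_conj f h hi) by auto.
  eapply Rle_trans; [apply HZ|]. apply Rmult_le_compat_l; auto.
  apply lipschitz_iter; auto.
Qed.

Theorem circle_homeo_entropy_zero (f : PC -> PC) : is_homeo Circle f -> top_entropy_zero Circle f.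
Proof.
  intros Hf delta Hd eta Heta.
  destruct (circle_homeo_conjugacy f (eta / 2) Hf ltac:(lra))
    as [h [hi [Z [[Hhi _] [HZ [HZlip Hlip]]]]]].
  set (L := exp (eta / 2)).
  assert (HL : 1 <= L) by (unfold L; rewrite <- exp_0; left; apply exp_increasing; lra).
  destruct (INR_archimed (eta / 2) (Z / delta) ltac:(lra)) as [N HN].
  exists N. intros n Hn l [Hnd Hsep].
  assert (HLn : 1 <= L ^ n) by (rewrite <- (pow1 n); apply pow_incr; lra).
  set (rho := delta / (Z * L ^ n)).
  assert (Hrho : 0 < rho) by (unfold rho; apply Rdiv_lt_0_compat; [lra|nra]).
  assert (Hcount : INR (length l) <= 1 / rho + 1).
  { rewrite <- (length_map h). apply separated_card_le; auto.
    - apply Injective_map_NoDup; auto. intros x y E. rewrite <- (Hhi x), <- (Hhi y), E; auto.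
    - intros x' y' Hx Hy Hne. apply in_map_iff in Hx, Hy.
      destruct Hx as [x [<- Hx]]. destruct Hy as [y [<- Hy]].
      destruct (Hsep x y Hx Hy (fun E => Hne (f_equal h E))) as [k [Hk Hkd]].
      pose proof (conj_iter_expansion Circle f h hi Z L k x y Hhi ltac:(lra) HZlip ltac:(lra) Hlip).
      assert (L ^ k <= L ^ n) by (apply Rle_pow; auto; lia).
      assert (Z * (L ^ k * Defs.dist Circle (h x) (h y)) <=
              Z * (L ^ n * Defs.dist Circle (h x) (h y))).
      { apply Rmult_le_compat_l; [lra|]. apply Rmult_le_compat_r; auto.
        apply dist_circle_nonneg. }
      unfold rho. apply Rlt_div_l; [apply Rmult_lt_0_compat; lra|]. lra. }
  set (X := L ^ n).
  assert (HX : X = exp (eta / 2 * INR n)) by (unfold X, L; rewrite exp_mult_INR; auto).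
  assert (HX2 : exp (eta * INR n) = X * X) by (rewrite HX, <- exp_plus; f_equal; field).
  assert (HXb : Z / delta + 1 <= X).
  { rewrite HX. apply le_INR in Hn. pose proof (pos_INR N).
    assert (eta / 2 * INR N <= eta / 2 * INR n) by (apply Rmult_le_compat_l; lra).
    pose proof (exp_ge_1_plus (eta / 2 * INR n) ltac:(apply Rmult_le_pos; lra)). lra. }
  assert (E1 : 1 / rho = Z / delta * X) by (unfold rho, X; field; split; lra).
  assert (0 <= Z / delta) by (apply Rdiv_le_0_compat; lra).
  assert (X * (Z / delta + 1) <= X * X) by (apply Rmult_le_compat_l; lra).
  rewrite HX2. lra.
Qed.

Theorem mainTheorem2 :
  (forall (M : cc1) (G : Group) (act : G -> pt M -> pt M) (gens : list G),
     is_homeo_action G M act ->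
     symmetric_set G gens ->
     generates G gens ->
     subexp_growth G gens ->
     forall eps : R, 0 < eps ->
       exists h hi : pt M -> pt M, homeo_pair M h hi /\
         forall s, In s gens -> lipschitz M (exp eps) (fun x => h (act s (hi x))))
  /\
  (forall f : pt Circle -> pt Circle, is_homeo Circle f ->
     forall eps : R, 0 < eps ->
       exists h hi : pt Circle -> pt Circle, homeo_pair Circle h hi /\
         is_homeo Circle (fun x => h (f (hi x))) /\
         lipschitz Circle (exp eps) (fun x => h (f (hi x))))
  /\
  (forall f : pt Circle -> pt Circle, is_homeo Circle f -> top_entropy_zero Circle f).
Proof.
  split; [|split].
  - intros M G act gens Hact _ _ Hgrowth. apply action_conjugate_lipschitz; auto.
  - exact circle_homeo_conjugate_lipschitz.
  - exact circle_homeo_entropy_zero.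
Qed.
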